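(* Let $s>0$, $Y>0$, $\tau\geq 0$, and consider the delay differential system \[ \dot x(t)=x(t)(1-x(t))-y(t)x(t),\qquad \dot y(t)=-sy(t)+Ye^{-s\tau}y(t-\tau)x(t-\tau), \] with initial data $(\phi,\psi)\in X:=C([-\tau,0],\mathbb{R}_+)^2$. Its equilibria are $E_0=(0,0)$, $E_1=(1,0)$ and $E_+=(x_+(\tau),y_+(\tau))=\left(\frac{s}{Y}e^{s\tau},\,1-\frac{s}{Y}e^{s\tau}\right)$. Let $\tau_c=\frac1s\ln\left(\frac{Y}{s}\right)$ and \[ X^0=\{(\phi,\psi)\in X:\ \phi(0)>0 \text{ and there exists } \theta\in[-\tau,0] \text{ with } \phi(\theta)\psi(\theta)>0\}. \] Then: \begin{enumerate} \item $E_0$ is always unstable. \item (a) $E_1$ is unstable if $0\leq\tau<\tau_c$; (b) $E_1$ is globally asymptotically stable with respect to initial data in $X^0$ if $\tau>\tau_c$ (i.e. if $\frac{se^{s\tau}}{Y}>1$). \item Both components of $E_+$ are positive if and only if $0\leq\tau<\tau_c$ (i.e. $\frac{se^{s\tau}}{Y}<1$). Moreover: (a) when both components of $E_+$ are positive and $\tau=0$, $E_+$ is globally asymptotically stable with respect to initial data in $\operatorname{int}\mathbb{R}^2_+$; (b) when both components of $E_+$ are positive (and $\tau\geq0$), the system is uniformly persistent with respect to initial data in $X^0$: there exists $\epsilon>0$, independent of $(\phi,\psi)\in X^0$, such that $\liminf_{t\to\infty}x(t)>\epsilon$ and $\liminf_{t\to\infty}y(t)>\epsilon$. \end{enumerat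e}
   Context: $\mathbb{R}_+=\{x\in\mathbb{R}:x\geq0\}$; $C([-\tau,0],\mathbb{R}_+)$ carries the uniform norm. Local stability of an equilibrium is in the sense of the linearized delay system, i.e. determined by the roots of its characteristic equation; global asymptotic stability with respect to a set of initial data means local asymptotic stability plus convergence to the equilibrium of every solution with initial data in that set. *)

From Stdlib Require Import Reals.
From Coquelicot Require Import Coquelicot.
Open Scope R_scope.

Definition tau_c (s Y : R) : R := / s * ln (Y / s).
Definition x_plus (s Y tau : R) : R := s / Y * exp (s * tau).
Definition y_plus (s Y tau : R) : R := 1 - s / Y * exp (s * tau).

(* ---------- Initial data in X = C([-tau,0], R_+)^2 ----------
   Initial functions are represented by functions R -> R; only their
   restriction to [-tau,0] matters. *)
Definition cont_on_interval (f : R -> R) (a b : R) : Prop :=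
  forall t, a <= t <= b ->
    filterlim f (within (fun u => a <= u <= b) (locally t)) (locally (f t)).

Definition in_X (tau : R) (phi psi : R -> R) : Prop :=
  cont_on_interval phi (- tau) 0 /\ cont_on_interval psi (- tau) 0 /\
  (forall t, - tau <= t <= 0 -> 0 <= phi t /\ 0 <= psi t).

Definition in_X0 (tau : R) (phi psi : R -> R) : Prop :=
  in_X tau phi psi /\ 0 < phi 0 /\
  exists theta, - tau <= theta <= 0 /\ 0 < phi theta * psi theta.

Definition is_solution (s Y tau : R) (phi psi x y : R -> R) : Prop :=
  (forall t, - tau <= t <= 0 -> x t = phi t /\ y t = psi t) /\
  (forall t, - tau <= t ->
     filterlim x (within (fun u => - tau <= u) (locally t)) (locally (x t)) /\
     filterlim y (within (fun u => - tau <= u) (locally t)) (locally (y t))) /\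
  (forall t, 0 < t ->
     is_derive x t (x t * (1 - x t) - y t * x t) /\
     is_derive y t (- s * y t + Y * exp (- s * tau) * y (t - tau) * x (t - tau))).

(* ---------- Linearization and characteristic equation ----------
   Right-hand side F(x,y,x_tau,y_tau) =
     ( x(1-x) - y x ,  -s y + Y e^{-s tau} y_tau x_tau ).
   Linearization at an equilibrium (xe,ye):
     u'(t) = A u(t) + B u(t - tau),
   A = dF/d(x,y), B = dF/d(x_tau,y_tau), entries written out below. *)
Definition jacA11 (xe ye : R) : R := 1 - 2 * xe - ye.
Definition jacA12 (xe : R) : R := - xe.
Definition jacA21 : R := 0.
Definition jacA22 (s : R) : R := - s.
Definition jacB11 : R := 0.
Definition jacB12 : R := 0.
Definition jacB21 (s Y tau ye : R) : R := Y * exp (- s * tau) * ye.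
Definition jacB22 (s Y tau xe : R) : R := Y * exp (- s * tau) * xe.

Definition cexp (z : C) : C :=
  (exp (Re z) * cos (Im z), exp (Re z) * sin (Im z)).

(* characteristic function det(lam I - A - B e^{-lam tau}) *)
Definition char_fun (s Y tau xe ye : R) (lam : C) : C :=
  let E := cexp (Cmult (RtoC (- tau)) lam) in
  let m11 := Cminus lam (Cplus (RtoC (jacA11 xe ye)) (Cmult (RtoC jacB11) E)) in
  let m12 := Copp (Cplus (RtoC (jacA12 xe)) (Cmult (RtoC jacB12) E)) in
  let m21 := Copp (Cplus (RtoC jacA21) (Cmult (RtoC (jacB21 s Y tau ye)) E)) in
  let m22 := Cminus lam (Cplus (RtoC (jacA22 s)) (Cmult (RtoC (jacB22 s Y tau xe)) E)) in
  Cminus (Cmult m11 m22) (Cmult m12 m21).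

Definition loc_asym_stable (s Y tau xe ye : R) : Prop :=
  forall lam : C, char_fun s Y tau xe ye lam = RtoC 0 -> Re lam < 0.

Definition unstable (s Y tau xe ye : R) : Prop :=
  exists lam : C, char_fun s Y tau xe ye lam = RtoC 0 /\ 0 < Re lam.

(* liminf_{t->oo} f(t) > e, unfolded:
   there is e' > e such that f(t) >= e' for all large t *)
Definition liminf_gt (f : R -> R) (e : R) : Prop :=
  exists e', e < e' /\ exists T, forall t, T <= t -> e' <= f t.

From Stdlib Require Import Reals Lra Psatz Classical.
From Coquelicot Require Import Coquelicot.
Open Scope R_scope.

(* Write [c = Y e^{-s tau}], so that [tau < tau_c] iff [c > s].  The characteristic
   function is triangular at [E0] and [E1]; at [E1] it is
   [(lam + 1) (lam + s - c e^{-lam tau})], which has a positive real root when [c > s]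
   and only roots with negative real part when [c < s].  At [E+] with [tau = 0] it is a
   quadratic with positive coefficients.

   Along a solution, [x] stays positive and ends up below [1 + d] for every [d > 0],
   while [y e^{s t}] is nondecreasing, so [y >= 0] and [y] is eventually bounded.
   The quantity [P = y + c * int_{t - tau}^t x y] satisfies [P' = y (c x - s)] and
   [y <= P <= K y].  If [c < s], [P] and hence [y] decay exponentially, and then
   [(ln x)' = 1 - x - y] pushes [x] to [1].  If [c > s], [ln x - P / (s/2)] increases
   while [x] is small and [ln P + 2 s ln x] increases while [y] is small; both are
   bounded above, so after crossing a fixed level neither [x] nor [y] can fall below
   an explicit floor, which gives uniform persistence.  If [tau = 0], the function
   [x - x_+ ln x + (y - y_+ ln y) / Y] decreases at rate [(x - x_+)^2]; a Barbalat
   argument gives [x -> x_+], and then [y -> y_+]. *)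

(** * Calculus on the real line *)

Lemma exp_le a b : a <= b -> exp a <= exp b.
Proof.
  intros Hab; destruct (Req_dec a b) as [->|]; [lra|].
  apply Rlt_le, exp_increasing; lra.
Qed.

Lemma ln_le_inv a b : 0 < a -> 0 < b -> ln a <= ln b -> a <= b.
Proof. intros Ha Hb H; rewrite <- (exp_ln a), <- (exp_ln b) by lra; now apply exp_le. Qed.

Lemma sub_mul_ln_ge m a : 0 < m -> 0 < a -> m - m * ln m <= a - m * ln a.
Proof.
  intros Hm Ha.
  assert (H := exp_ineq1_le (ln (a / m))).
  rewrite exp_ln, ln_div in H by (try apply Rdiv_lt_0_compat; lra).
  assert (Hm' : m * (1 + (ln a - ln m)) <= m * (a / m)) by (apply Rmult_le_compat_l; lra).
  replace (m * (a / m)) with a in Hm' by (field; lra).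
  lra.
Qed.

Lemma exp_decay_eventually_lt A k T e : 0 <= A -> 0 < k -> 0 < e ->
  exists T', T <= T' /\ forall t, T' <= t -> A * exp (- k * (t - T)) < e.
Proof.
  intros HA Hk He.
  assert (Hq : 0 <= A / (e * k)) by (apply Rdiv_le_0_compat; [lra | apply Rmult_lt_0_compat; lra]).
  exists (T + A / (e * k)); split; [lra|]; intros t Ht.
  set (v := k * (t - T)).
  assert (Hv : A <= e * v).
  { replace A with (e * k * (A / (e * k))) at 1 by (field; lra).
    unfold v; rewrite Rmult_assoc; apply Rmult_le_compat_l; [lra|].
    apply Rmult_le_compat_l; lra. }
  replace (- k * (t - T)) with (- v) by (unfold v; ring); rewrite exp_Ropp.
  assert (H1 := exp_ineq1_le v); assert (Hev := exp_pos v).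
  apply Rmult_lt_reg_r with (exp v); auto.
  rewrite Rmult_assoc, Rinv_l by lra; nra.
Qed.

Lemma is_derive_Rmult (f g : R -> R) t df dg :
  is_derive f t df -> is_derive g t dg ->
  is_derive (fun r => f r * g r) t (df * g t + f t * dg).
Proof. intros Hf Hg; apply (is_derive_mult f g); auto; intros; apply Rmult_comm. Qed.

Lemma is_derive_exp_scal k t : is_derive (fun r => exp (k * r)) t (k * exp (k * t)).
Proof. auto_derive; [auto | ring]. Qed.

Lemma is_derive_ln_comp (f : R -> R) t df :
  0 < f t -> is_derive f t df -> is_derive (fun r => ln (f r)) t (df / f t).
Proof. intros Hp Hf; apply (is_derive_comp ln f); auto; now apply is_derive_ln. Qed.

Lemma is_derive_shift (f : R -> R) a t df :
  is_derive f (t - a) df -> is_derive (fun r => f (r - a)) t df.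
Proof.
  intros Hf.
  assert (Hg : is_derive (fun r => r - a) t 1) by (auto_derive; [auto | ring]).
  assert (H := is_derive_comp f (fun r => r - a) t df 1 Hf Hg).
  change (is_derive (fun r => f (r - a)) t (1 * df)) in H.
  now rewrite Rmult_1_l in H.
Qed.

Lemma continuity_pt_of_is_derive (f : R -> R) t d : is_derive f t d -> continuity_pt f t.
Proof.
  intros H; apply continuity_pt_filterlim.
  apply (ex_derive_continuous (K := R_AbsRing) (V := R_NormedModule)); now exists d.
Qed.

Lemma MVT_diff_ge (f df : R -> R) a b r : a <= b ->
  (forall t, a < t < b -> is_derive f t (df t)) ->
  (forall t, a <= t <= b -> continuity_pt f t) ->
  (forall t, a <= t <= b -> r <= df t) -> r * (b - a) <= f b - f a.
Proof.
  intros Hab Hd Hc Hr.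
  destruct (MVT_gen f a b df) as [c [Hc1 ->]];
    rewrite ?Rmin_left, ?Rmax_right in * by lra; auto.
  apply Rmult_le_compat_r; [lra | auto].
Qed.

Lemma diff_ge_of_derive (f df : R -> R) a b r : a <= b ->
  (forall t, a <= t <= b -> is_derive f t (df t)) ->
  (forall t, a <= t <= b -> r <= df t) -> r * (b - a) <= f b - f a.
Proof.
  intros Hab Hd Hr; apply (MVT_diff_ge f df); auto.
  - intros t Ht; apply Hd; lra.
  - intros t Ht; apply (continuity_pt_of_is_derive f t (df t)); auto.
Qed.

Lemma diff_le_of_derive (f df : R -> R) a b r : a <= b ->
  (forall t, a <= t <= b -> is_derive f t (df t)) ->
  (forall t, a <= t <= b -> df t <= r) -> f b - f a <= r * (b - a).
Proof.
  intros Hab Hd Hr.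
  assert (- r * (b - a) <= - f b - - f a); [|lra].
  apply (diff_ge_of_derive (fun t => - f t) (fun t => - df t)); auto.
  - intros t Ht; apply (is_derive_opp f), Hd; auto.
  - intros t Ht; specialize (Hr t Ht); lra.
Qed.

Lemma continuity_pt_eps (f : R -> R) x : continuity_pt f x ->
  forall e, 0 < e -> exists d, 0 < d /\ forall t, Rabs (t - x) < d -> Rabs (f t - f x) < e.
Proof.
  intros Hc e He; apply continuity_pt_filterlim in Hc.
  apply filterlim_locally with (eps := mkposreal e He) in Hc.
  destruct Hc as [d Hd]; exists d; split; [apply cond_pos|].
  intros t Ht; apply (Hd t), Ht.
Qed.

Lemma last_crossing (u : R -> R) a b L : a <= b ->
  (forall t, a <= t <= b -> continuity_pt u t) -> L <= u a -> u b < L ->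
  exists S, a <= S < b /\ u S = L /\ forall r, S <= r <= b -> u r <= L.
Proof.
  intros Hab Hc Ha Hb.
  set (E := fun t => a <= t <= b /\ L <= u t).
  destruct (completeness E) as [S [HS1 HS2]].
  - exists b; intros t [Ht _]; lra.
  - exists a; split; [lra | auto].
  assert (HaS : a <= S) by (apply HS1; split; [lra | auto]).
  assert (HSb : S <= b) by (apply HS2; intros t [Ht _]; lra).
  assert (Hafter : forall r, S < r <= b -> u r < L).
  { intros r Hr; destruct (Rlt_le_dec (u r) L) as [|Hge]; auto.
    assert (r <= S) by (apply HS1; split; [lra | auto]); lra. }
  assert (HuS : L <= u S).
  { destruct (Rle_lt_dec L (u S)) as [|Hlt]; auto.
    destruct (continuity_pt_eps u S (Hc S ltac:(lra)) (L - u S) ltac:(lra)) as [d [Hd Hnear]].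
    assert (S <= S - d / 2); [|lra].
    apply HS2; intros t [Ht1 Ht2].
    assert (t <= S) by (apply HS1; split; auto).
    destruct (Rle_lt_dec t (S - d / 2)); auto.
    assert (Hut := Hnear t ltac:(apply Rabs_def1; lra)); apply Rabs_def2 in Hut; lra. }
  assert (HSlt : S < b) by (destruct (Req_dec S b); [subst; lra | lra]).
  assert (HuS' : u S <= L).
  { destruct (Rle_lt_dec (u S) L) as [|Hlt]; auto.
    destruct (continuity_pt_eps u S (Hc S ltac:(lra)) (u S - L) ltac:(lra)) as [d [Hd Hnear]].
    set (r := Rmin (S + d / 2) b).
    assert (Hr : S < r <= b) by (unfold r; apply Rmin_case_strong; lra).
    assert (Hur := Hnear r ltac:(apply Rabs_def1; unfold r in *; apply Rmin_case_strong; lra)).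
    apply Rabs_def2 in Hur; specialize (Hafter r Hr); lra. }
  exists S; repeat split; try lra.
  intros r Hr; destruct (Req_dec r S) as [->|]; [lra|]; apply Rlt_le, Hafter; lra.
Qed.

Lemma first_crossing (u : R -> R) a b L : a <= b ->
  (forall t, a <= t <= b -> continuity_pt u t) -> L < u a -> u b <= L ->
  exists S, a < S <= b /\ u S = L /\ forall r, a <= r <= S -> L <= u r.
Proof.
  intros Hab Hc Ha Hb.
  destruct (last_crossing (fun r => - u (- r)) (- b) (- a) (- L)) as [S [HS1 [HS2 HS3]]];
    rewrite ?Ropp_involutive; try lra.
  - intros t Ht; apply (continuity_pt_opp (fun r => u (- r))).
    apply (continuity_pt_comp Ropp u); [apply continuity_pt_opp, continuity_pt_id | apply Hc; lra].
  - exists (- S); repeat split; try lra.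
    intros r Hr; specialize (HS3 (- r) ltac:(lra)); rewrite Ropp_involutive in HS3; lra.
Qed.

Lemma reaches_level (u G dG : R -> R) T L r Gmax : 0 < r ->
  (forall t, T < t -> is_derive G t (dG t)) ->
  (forall t, T < t -> u t < L -> r <= dG t) ->
  (forall t, T < t -> u t < L -> G t <= Gmax) ->
  exists t0, T < t0 /\ L <= u t0.
Proof.
  intros Hr Hd HdG HG; apply NNPP; intros Hnot.
  assert (Hbelow : forall t, T < t -> u t < L).
  { intros t Ht; destruct (Rlt_le_dec (u t) L); auto; exfalso; eauto. }
  set (t1 := T + 1); set (t2 := t1 + Rabs (Gmax - G t1) / r + 1).
  assert (0 <= Rabs (Gmax - G t1) / r) by (apply Rdiv_le_0_compat; [apply Rabs_pos | lra]).
  assert (Hgrow : r * (t2 - t1) <= G t2 - G t1).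
  { apply (diff_ge_of_derive G dG); unfold t2, t1 in *; try lra.
    - intros t Ht; apply Hd; lra.
    - intros t Ht; apply HdG, Hbelow; lra. }
  assert (G t2 <= Gmax) by (apply HG, Hbelow; unfold t2, t1 in *; lra).
  assert (r * (t2 - t1) = Rabs (Gmax - G t1) + r) by (unfold t2; field; lra).
  assert (Gmax - G t1 <= Rabs (Gmax - G t1)) by apply RRle_abs.
  lra.
Qed.

Lemma persistence_crossing (u G dG : R -> R) T L r Gmax : 0 < r ->
  (forall t, T < t -> continuity_pt u t) ->
  (forall t, T < t -> is_derive G t (dG t)) ->
  (forall t, T < t -> u t <= L -> r <= dG t) ->
  (forall t, T < t -> u t < L -> G t <= Gmax) ->
  exists t0, T < t0 /\ forall t, t0 <= t -> u t < L ->
    exists S, t0 <= S <= t /\ u S = L /\ G S <= G t.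
Proof.
  intros Hr Hc Hd HdG HG.
  destruct (reaches_level u G dG T L r Gmax) as [t0 [Ht0 Hut0]]; auto.
  { intros t Ht Hlt; apply HdG; lra. }
  exists t0; split; auto; intros t Ht Hlt.
  destruct (last_crossing u t0 t L Ht) as [S [HS1 [HS2 HS3]]]; auto.
  { intros r0 Hr0; apply Hc; lra. }
  exists S; repeat split; try lra.
  assert (0 * (t - S) <= G t - G S); [|lra].
  apply (diff_ge_of_derive G dG); try lra.
  - intros r0 Hr0; apply Hd; lra.
  - intros r0 Hr0; assert (r <= dG r0) by (apply HdG; [lra | apply HS3; lra]); lra.
Qed.

Lemma eventually_ge_of_derive (f df : R -> R) T L r : 0 < r ->
  (forall t, T < t -> is_derive f t (df t)) ->
  (forall t, T < t -> f t <= L -> r <= df t) ->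
  exists T', T < T' /\ forall t, T' <= t -> L <= f t.
Proof.
  intros Hr Hd Hdf.
  destruct (persistence_crossing f f df T L r L) as [t0 [Ht0 Hcross]]; auto.
  - intros t Ht; apply (continuity_pt_of_is_derive f t (df t)), Hd, Ht.
  - intros t Ht Hlt; lra.
  - exists t0; split; auto; intros t Ht.
    destruct (Rle_lt_dec L (f t)) as [|Hlt]; auto.
    destruct (Hcross t Ht Hlt) as [S [_ [HS HSt]]]; lra.
Qed.

Lemma pos_of_derive_ge (u du : R -> R) a b M : a <= b -> 0 < u a ->
  (forall t, a <= t <= b -> is_derive u t (du t)) ->
  (forall t, a <= t <= b -> 0 <= u t -> - M * u t <= du t) ->
  forall t, a <= t <= b -> 0 < u t.
Proof.
  intros Hab Ha Hd Hdu t Ht.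
  destruct (Rlt_le_dec 0 (u t)) as [|Hle]; auto; exfalso.
  destruct (first_crossing u a t 0) as [S [HS1 [HS2 HS3]]]; try lra.
  { intros r Hr; apply (continuity_pt_of_is_derive u r (du r)), Hd; lra. }
  (* [u e^{M t}] is nondecreasing as long as [u >= 0] *)
  assert (Hmono : 0 * (S - a) <= u S * exp (M * S) - u a * exp (M * a)).
  { apply (diff_ge_of_derive (fun r => u r * exp (M * r)) (fun r => du r * exp (M * r) + u r * (M * exp (M * r)))); try lra.
    - intros r Hr; apply (is_derive_Rmult u (fun r => exp (M * r))); [apply Hd; lra | apply is_derive_exp_scal].
    - intros r Hr; assert (Hu := HS3 r Hr); assert (Hdr := Hdu r ltac:(lra) Hu).
      assert (0 < exp (M * r)) by apply exp_pos.
      assert (0 <= (du r + M * u r) * exp (M * r)) by (apply Rmult_le_pos; lra).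
      nra. }
  rewrite HS2 in Hmono.
  assert (0 < u a * exp (M * a)) by (apply Rmult_lt_0_compat; [lra | apply exp_pos]).
  lra.
Qed.

Lemma exp_decay_of_derive (P dP : R -> R) T k :
  (forall t, T <= t -> is_derive P t (dP t)) -> (forall t, T <= t -> dP t <= - k * P t) ->
  forall t, T <= t -> P t <= P T * exp (- k * (t - T)).
Proof.
  intros Hd Hk t Ht.
  assert (Hmono : P t * exp (k * t) - P T * exp (k * T) <= 0 * (t - T)).
  { apply (diff_le_of_derive (fun r => P r * exp (k * r)) (fun r => dP r * exp (k * r) + P r * (k * exp (k * r)))); auto.
    - intros r Hr; apply (is_derive_Rmult P (fun r => exp (k * r))); [apply Hd; lra | apply is_derive_exp_scal].
    - intros r Hr; specialize (Hk r ltac:(lra)); assert (0 < exp (k * r)) by apply exp_pos.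
      assert ((dP r + k * P r) * exp (k * r) <= 0) by (apply Rmult_le_0_r; lra).
      nra. }
  assert (Hsplit : exp (- k * (t - T)) * exp (k * t) = exp (k * T))
    by (rewrite <- exp_plus; f_equal; ring).
  assert (0 < exp (k * t)) by apply exp_pos.
  apply Rmult_le_reg_r with (exp (k * t)); auto.
  rewrite Rmult_assoc, Hsplit; lra.
Qed.

Lemma lipschitz_of_derive (u du : R -> R) T K :
  (forall t, T <= t -> is_derive u t (du t)) -> (forall t, T <= t -> Rabs (du t) <= K) ->
  forall a b, T <= a -> a <= b -> Rabs (u b - u a) <= K * (b - a).
Proof.
  intros Hd HK a b Ha Hab.
  assert (Hbound : forall t, a <= t <= b -> - K <= du t <= K)
    by (intros t Ht; apply Rabs_le_between, HK; lra).
  apply Rabs_le_between; split.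
  - assert (- K * (b - a) <= u b - u a); [|lra].
    apply (diff_ge_of_derive u du); auto.
    + intros t Ht; apply Hd; lra.
    + intros t Ht; apply Hbound; auto.
  - apply (diff_le_of_derive u du); auto.
    + intros t Ht; apply Hd; lra.
    + intros t Ht; apply Hbound; auto.
Qed.

Definition cauchy_at_infty (F : R -> R) :=
  forall e, 0 < e -> exists T, forall t t', T <= t -> T <= t' -> Rabs (F t - F t') < e.

Lemma cauchy_at_infty_of_nonincreasing (F : R -> R) T m :
  (forall a b, T <= a <= b -> F b <= F a) -> (forall t, T <= t -> m <= F t) ->
  cauchy_at_infty F.
Proof.
  intros Hmon Hb e He.
  set (E := fun v => exists t, T <= t /\ v = - F t).
  destruct (completeness E) as [l [Hl1 Hl2]].
  - exists (- m); intros v [t [Ht ->]]; specialize (Hb t Ht); lra.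
  - exists (- F T), T; split; [lra | auto].
  assert (Hex : exists t1, T <= t1 /\ l - e < - F t1).
  { apply NNPP; intros Hn.
    assert (l <= l - e); [|lra].
    apply Hl2; intros v [t [Ht ->]].
    destruct (Rlt_le_dec (l - e) (- F t)); [exfalso; eauto | lra]. }
  destruct Hex as [t1 [Ht1 Hlt]]; exists t1; intros t t' Ht Ht'.
  assert (- F t <= l) by (apply Hl1; exists t; split; [lra | auto]).
  assert (- F t' <= l) by (apply Hl1; exists t'; split; [lra | auto]).
  assert (F t <= F t1) by (apply Hmon; lra).
  assert (F t' <= F t1) by (apply Hmon; lra).
  apply Rabs_def1; lra.
Qed.

Lemma cauchy_at_infty_of_lim (f : R -> R) l :
  (forall e, 0 < e -> exists T, forall t, T <= t -> Rabs (f t - l) < e) -> cauchy_at_infty f.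
Proof.
  intros H e He; destruct (H (e / 2) ltac:(lra)) as [T HT]; exists T; intros t t' Ht Ht'.
  assert (H1 := HT t Ht); assert (H2 := HT t' Ht').
  apply Rabs_def2 in H1; apply Rabs_def2 in H2; apply Rabs_def1; lra.
Qed.

(* A Barbalat-type argument: while [u >= e], [F] drops at a fixed rate for a time
   proportional to [e / K] (the Lipschitz constant keeps [u] above [e/2]), which a
   Cauchy [F] cannot afford. *)
Lemma barbalat (F dF u : R -> R) T0 K : 0 < K -> cauchy_at_infty F ->
  (forall t, T0 <= t -> is_derive F t (dF t)) ->
  (forall a b, T0 <= a -> a <= b -> Rabs (u b - u a) <= K * (b - a)) ->
  (forall e, 0 < e -> exists d T, 0 < d /\ forall t, T <= t -> e <= u t -> dF t <= - d) ->
  forall e, 0 < e -> exists T, forall t, T <= t -> u t < e.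
Proof.
  intros HK HC Hd Hl Hdrop e He.
  destruct (Hdrop (e / 2) ltac:(lra)) as [d [T1 [Hd0 HT1]]].
  set (h := e / (2 * K)).
  assert (Hh : 0 < h) by (unfold h; apply Rdiv_lt_0_compat; lra).
  destruct (HC (d * h) ltac:(apply Rmult_lt_0_compat; lra)) as [T2 HT2].
  exists (Rmax T0 (Rmax T1 T2)); intros t Ht.
  assert (T0 <= t /\ T1 <= t /\ T2 <= t) as [Ha [Hb Hc]]
    by (revert Ht; unfold Rmax; repeat destruct Rle_dec; intros; lra).
  destruct (Rlt_le_dec (u t) e) as [|Hge]; auto; exfalso.
  assert (Hdec : F (t + h) - F t <= - d * (t + h - t)).
  { apply (diff_le_of_derive F dF); try lra.
    - intros r Hr; apply Hd; lra.
    - intros r Hr; apply HT1; [lra|].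
      assert (Hr2 := Hl t r Ha ltac:(lra)); apply Rabs_le_between in Hr2.
      assert (K * (r - t) <= K * h) by (apply Rmult_le_compat_l; lra).
      assert (K * h = e / 2) by (unfold h; field; lra).
      lra. }
  specialize (HT2 (t + h) t ltac:(lra) ltac:(lra)); apply Rabs_def2 in HT2; lra.
Qed.

Lemma abs_lt_of_one_sided (u : R -> R) l :
  (forall e, 0 < e -> exists T, forall t, T <= t -> u t - l < e) ->
  (forall e, 0 < e -> exists T, forall t, T <= t -> l - u t < e) ->
  forall e, 0 < e -> exists T, forall t, T <= t -> Rabs (u t - l) < e.
Proof.
  intros Hup Hlow e He.
  destruct (Hup e He) as [T1 H1]; destruct (Hlow e He) as [T2 H2].
  exists (Rmax T1 T2); intros t Ht.
  assert (Hm1 := Rmax_l T1 T2); assert (Hm2 := Rmax_r T1 T2).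
  specialize (H1 t ltac:(lra)); specialize (H2 t ltac:(lra)); apply Rabs_def1; lra.
Qed.

Lemma is_lim_p_infty_intro (f : R -> R) l :
  (forall e, 0 < e -> exists T, forall t, T <= t -> Rabs (f t - l) < e) ->
  is_lim f p_infty l.
Proof.
  intros H; apply is_lim_spec; intros eps.
  destruct (H eps (cond_pos eps)) as [T HT]; exists T; intros t Ht; apply HT; lra.
Qed.
Lemma continuity_pt_of_within_ge (f : R -> R) a t :
  filterlim f (within (fun u => a <= u) (locally t)) (locally (f t)) -> a < t ->
  continuity_pt f t.
Proof.
  intros H Hat; apply continuity_pt_filterlim, filterlim_locally; intros eps.
  apply filterlim_locally with (eps := eps) in H; destruct H as [d Hd].
  assert (Hp : 0 < Rmin d (t - a)) by (apply Rmin_glb_lt; [apply cond_pos | lra]).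
  exists (mkposreal _ Hp); intros u Hu.
  change (Rabs (u - t) < Rmin d (t - a)) in Hu.
  assert (Rmin d (t - a) <= d) by apply Rmin_l.
  assert (Rmin d (t - a) <= t - a) by apply Rmin_r.
  apply Hd; [change (Rabs (u - t) < d); lra | apply Rabs_def2 in Hu; lra].
Qed.

Lemma pos_near_of_within_ge (f : R -> R) a t :
  filterlim f (within (fun u => a <= u) (locally t)) (locally (f t)) -> 0 < f t ->
  exists d, 0 < d /\ forall u, a <= u -> Rabs (u - t) < d -> 0 < f u.
Proof.
  intros H Hpos; apply filterlim_locally with (eps := mkposreal _ Hpos) in H.
  destruct H as [d Hd]; exists d; split; [apply cond_pos|]; intros u Hu1 Hu2.
  assert (Hfu := Hd u Hu2 Hu1); change (Rabs (f u - f t) < f t) in Hfu.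
  apply Rabs_def2 in Hfu; lra.
Qed.

Lemma ex_RInt_of_continuity_pos (h : R -> R) a b :
  (forall r, 0 < r -> continuity_pt h r) -> 0 < a -> 0 < b -> ex_RInt h a b.
Proof.
  intros Hc Ha Hb; apply (ex_RInt_continuous (V := R_CompleteNormedModule)); intros z Hz.
  apply continuity_pt_filterlim, Hc.
  assert (0 < Rmin a b) by (apply Rmin_glb_lt; auto); lra.
Qed.

Lemma is_derive_RInt_of_continuity_pos (h : R -> R) t :
  (forall r, 0 < r -> continuity_pt h r) -> 0 < t -> is_derive (RInt h 1) t (h t).
Proof.
  intros Hc Ht; apply (is_derive_RInt h (RInt h 1) 1 t).
  - exists (mkposreal (t / 2) ltac:(lra)); intros b Hb.
    change (Rabs (b - t) < t / 2) in Hb; apply Rabs_def2 in Hb.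
    apply (RInt_correct (V := R_CompleteNormedModule)), ex_RInt_of_continuity_pos; auto; lra.
  - apply continuity_pt_filterlim, Hc, Ht.
Qed.

(** * Equilibria and characteristic roots *)

Definition eff_yield (s Y tau : R) : R := Y * exp (- s * tau).

Lemma eff_yield_pos s Y tau : 0 < Y -> 0 < eff_yield s Y tau.
Proof. intros HY; apply Rmult_lt_0_compat; [lra | apply exp_pos]. Qed.

Lemma eff_yield_tau_c s Y tau : 0 < s -> 0 < Y ->
  eff_yield s Y tau = s * exp (s * (tau_c s Y - tau)).
Proof.
  intros Hs HY; unfold eff_yield, tau_c.
  replace (s * (/ s * ln (Y / s) - tau)) with (ln (Y / s) + - s * tau) by (field; lra).
  rewrite exp_plus, exp_ln by (apply Rdiv_lt_0_compat; lra); field; lra.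
Qed.

Lemma tau_lt_tau_c_iff s Y tau : 0 < s -> 0 < Y ->
  (tau < tau_c s Y <-> s < eff_yield s Y tau).
Proof.
  intros Hs HY; rewrite eff_yield_tau_c by auto; split; intros H.
  - assert (1 < exp (s * (tau_c s Y - tau))); [|nra].
    rewrite <- exp_0; apply exp_increasing; nra.
  - assert (1 < exp (s * (tau_c s Y - tau))) by nra.
    rewrite <- exp_0 in H0; apply exp_lt_inv in H0; nra.
Qed.

Lemma tau_c_lt_iff s Y tau : 0 < s -> 0 < Y ->
  (tau_c s Y < tau <-> eff_yield s Y tau < s).
Proof.
  intros Hs HY; rewrite eff_yield_tau_c by auto; split; intros H.
  - assert (exp (s * (tau_c s Y - tau)) < 1); [|nra].
    rewrite <- exp_0; apply exp_increasing; nra.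
  - assert (exp (s * (tau_c s Y - tau)) < 1) by nra.
    rewrite <- exp_0 in H0; apply exp_lt_inv in H0; nra.
Qed.

Lemma x_plus_eq s Y tau : 0 < Y -> x_plus s Y tau = s / eff_yield s Y tau.
Proof.
  intros HY; unfold x_plus, eff_yield.
  replace (- s * tau) with (- (s * tau)) by ring; rewrite exp_Ropp.
  assert (0 < exp (s * tau)) by apply exp_pos; field; lra.
Qed.

Lemma E_plus_pos_iff s Y tau : 0 < s -> 0 < Y ->
  (0 < x_plus s Y tau /\ 0 < y_plus s Y tau) <-> tau < tau_c s Y.
Proof.
  intros Hs HY; rewrite tau_lt_tau_c_iff by auto.
  assert (Hc := eff_yield_pos s Y tau HY).
  assert (Hy : y_plus s Y tau = 1 - x_plus s Y tau) by reflexivity.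
  rewrite Hy, x_plus_eq by auto.
  assert (Hxpos : 0 < s / eff_yield s Y tau) by (apply Rdiv_lt_0_compat; lra).
  split.
  - intros [_ H]; apply Rmult_lt_reg_r with (/ eff_yield s Y tau);
      [apply Rinv_0_lt_compat; lra|].
    rewrite Rinv_r by lra; unfold Rdiv in *; lra.
  - intros H; split; auto.
    assert (s / eff_yield s Y tau < 1); [|lra].
    apply Rmult_lt_reg_r with (eff_yield s Y tau); auto.
    unfold Rdiv; rewrite Rmult_assoc, Rinv_l by lra; lra.
Qed.

Lemma char_fun_components s Y tau xe ye a b :
  let e := exp (- tau * a) in let co := cos (- tau * b) in let si := sin (- tau * b) in
  let p1 := a - (jacA11 xe ye + jacB11 * e * co) in
  let p2 := b - jacB11 * e * si in
  let q1 := a - (jacA22 s + jacB22 s Y tau xe * e * co) in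
  let q2 := b - jacB22 s Y tau xe * e * si in
  let m1 := - (jacA12 xe + jacB12 * e * co) in
  let m2 := - (jacB12 * e * si) in
  let n1 := - (jacA21 + jacB21 s Y tau ye * e * co) in
  let n2 := - (jacB21 s Y tau ye * e * si) in
  char_fun s Y tau xe ye (a, b) =
    (p1 * q1 - p2 * q2 - (m1 * n1 - m2 * n2), p1 * q2 + p2 * q1 - (m1 * n2 + m2 * n1)).
Proof.
  intros; unfold char_fun, cexp; simpl.
  replace (- tau * a - 0 * b) with (- tau * a) by ring.
  replace (- tau * b + 0 * a) with (- tau * b) by ring.
  unfold Cminus, Cplus, Cmult, Copp, RtoC; simpl.
  apply injective_projections; simpl;
    subst e co si p1 p2 q1 q2 m1 m2 n1 n2; ring.
Qed.

Lemma Cmult_eq0_r (p1 p2 q1 q2 : R) :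
  p1 * q1 - p2 * q2 = 0 -> p1 * q2 + p2 * q1 = 0 -> 0 < p1 ^ 2 + p2 ^ 2 -> q1 = 0.
Proof.
  intros E1 E2 Hp.
  assert (Hq : (p1 ^ 2 + p2 ^ 2) * q1 = 0).
  { replace ((p1 ^ 2 + p2 ^ 2) * q1) with (p1 * (p1 * q1 - p2 * q2) + p2 * (p1 * q2 + p2 * q1))
      by ring.
    rewrite E1, E2; ring. }
  apply Rmult_integral in Hq; destruct Hq; lra.
Qed.

Ltac expand_char_fun H Hre Him :=
  rewrite char_fun_components in H;
  unfold jacA11, jacA12, jacA21, jacA22, jacB11, jacB12, jacB21, jacB22 in H;
  injection H as Hre Him.

Lemma E0_unstable s Y tau : unstable s Y tau 0 0.
Proof.
  exists (1, 0); split; [|simpl; lra].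
  rewrite char_fun_components.
  unfold RtoC, jacA11, jacA12, jacA21, jacA22, jacB11, jacB12, jacB21, jacB22.
  apply injective_projections; simpl; ring.
Qed.

(* At [E1] the characteristic function factors as [(lam + 1) (lam + s - c e^{-lam tau})];
   the second factor is negative at [0] and positive at [c]. *)
Lemma E1_unstable s Y tau : 0 < s -> 0 <= tau -> s < eff_yield s Y tau ->
  unstable s Y tau 1 0.
Proof.
  intros Hs Htau Hc; set (c := eff_yield s Y tau) in *.
  set (f := fun r => r + s - c * exp (- tau * r)).
  assert (Hf : continuity f).
  { intros r; apply (continuity_pt_of_is_derive f r (1 + c * tau * exp (- tau * r))).
    unfold f; auto_derive; [auto | ring]. }
  assert (Hf0 : f 0 < 0) by (unfold f; rewrite Rmult_0_r, exp_0; lra).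
  assert (Hfc : 0 < f c).
  { unfold f; assert (exp (- tau * c) <= 1) by (rewrite <- exp_0; apply exp_le; nra).
    assert (c * exp (- tau * c) <= c) by nra; lra. }
  destruct (IVT f 0 c Hf ltac:(lra) Hf0 Hfc) as [r [Hr Hfr]].
  assert (Hr0 : r <> 0) by (intros ->; lra).
  exists (r, 0); split; [|simpl; lra].
  rewrite char_fun_components.
  unfold RtoC, jacA11, jacA12, jacA21, jacA22, jacB11, jacB12, jacB21, jacB22.
  fold (eff_yield s Y tau) c.
  replace (- tau * 0) with 0 by ring; rewrite cos_0, sin_0.
  unfold f in Hfr; apply injective_projections; simpl; [|ring].
  replace (r - (- s + c * 1 * exp (- tau * r) * 1)) with (r + s - c * exp (- tau * r)) by ring.
  rewrite Hfr; ring.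
Qed.

Lemma E1_loc_asym_stable s Y tau : 0 < Y -> 0 <= tau -> eff_yield s Y tau < s ->
  loc_asym_stable s Y tau 1 0.
Proof.
  intros HY Htau Hc [a b] Hroot; simpl.
  expand_char_fun Hroot Hre Him.
  fold (eff_yield s Y tau) in *; set (c := eff_yield s Y tau) in *.
  set (e := exp (- tau * a)) in *; set (co := cos (- tau * b)) in *; set (si := sin (- tau * b)) in *.
  destruct (Rlt_le_dec a 0) as [|Ha]; auto; exfalso.
  assert (Hq : a + s - c * e * co = 0).
  { apply (Cmult_eq0_r (a + 1) b _ (b - c * e * si)); [lra | lra | nra]. }
  assert (e <= 1) by (unfold e; rewrite <- exp_0; apply exp_le; nra).
  assert (0 < e) by apply exp_pos.
  assert (co <= 1) by apply COS_bound.
  assert (0 < c) by (apply eff_yield_pos; auto).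
  assert (c * e * co <= c * e) by (rewrite <- (Rmult_1_r (c * e)) at 2; apply Rmult_le_compat_l; nra).
  nra.
Qed.

Lemma E_plus_loc_asym_stable_no_delay s Y : 0 < s -> 0 < Y -> 0 < y_plus s Y 0 ->
  loc_asym_stable s Y 0 (x_plus s Y 0) (y_plus s Y 0).
Proof.
  intros Hs HY Hyp [a b] Hroot; simpl.
  assert (Hc := eff_yield_pos s Y 0 HY).
  assert (Hxe := x_plus_eq s Y 0 HY).
  assert (Hye : y_plus s Y 0 = 1 - x_plus s Y 0) by reflexivity.
  expand_char_fun Hroot Hre Him.
  fold (eff_yield s Y 0) in *.
  rewrite Ropp_0, !Rmult_0_l, exp_0, cos_0, sin_0 in *.
  set (c := eff_yield s Y 0) in *; set (xe := x_plus s Y 0) in *; set (ye := y_plus s Y 0) in *.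
  assert (Hcx : c * xe = s) by (rewrite Hxe; field; lra).
  assert (Hxe_pos : 0 < xe) by (rewrite Hxe; apply Rdiv_lt_0_compat; lra).
  rewrite <- Hcx, Hye in Hre, Him.
  assert (Hquad : a * a + xe * a - b * b + c * xe * ye = 0) by (rewrite Hye, <- Hre; ring).
  assert (Hcross : b * (2 * a + xe) = 0) by (rewrite <- Him; ring).
  assert (Hdet : 0 < c * xe * ye) by (apply Rmult_lt_0_compat; nra).
  apply Rmult_integral in Hcross; destruct Hcross as [-> | Ha]; nra.
Qed.

(** * Global dynamics *)

(* If [c x <= s], the term [2 s (1 - x - y)] dominates (using [x <= s / c] and the
   smallness of [y]); if [c x > s], the first term is positive and the margin [d] on
   [x <= 1 + d] is small enough for it to absorb the possibly negative second term. *)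
Lemma persistence_rate_ineq (c s wmin d y0 m x y w : R) :
  0 < s -> s < c -> 0 < wmin <= 1 -> 0 <= d ->
  8 * s * d <= (c - s) * wmin -> 8 * s * y0 <= (c - s) * wmin ->
  y0 <= 1 / 4 -> y0 <= (1 - s / c) / 2 ->
  m <= s / 2 -> m <= s * (1 - s / c) -> m <= (c - s) * wmin / 2 ->
  0 < x <= 1 + d -> 0 <= y <= y0 -> wmin <= w <= 1 ->
  m <= w * (c * x - s) + 2 * s * (1 - x - y).
Proof.
  intros Hs Hsc Hw0 Hd Hd8 Hy8 Hy4 Hys Hm1 Hm2 Hm3 Hx Hy Hw.
  set (xs := s / c) in *.
  assert (Hxs : c * xs = s) by (unfold xs; field; lra).
  destruct (Rle_lt_dec (c * x) s) as [Hlow|Hhigh].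
  - assert (w * (c * x - s) >= c * x - s) by nra.
    assert (x <= xs) by (apply Rmult_le_reg_l with c; lra).
    destruct (Rle_lt_dec (2 * s) c).
    + assert (0 <= (c - 2 * s) * x) by (apply Rmult_le_pos; lra); nra.
    + assert ((c - 2 * s) * x >= (c - 2 * s) * xs) by nra.
      assert (2 * s * (1 - xs - y) >= s * (1 - xs)) by nra.
      nra.
  - assert (w * (c * x - s) >= wmin * (c * x - s)) by nra.
    destruct (Rle_lt_dec (2 * s) (c * wmin)).
    + assert (xs <= x) by (apply Rmult_le_reg_l with c; lra).
      assert ((c * wmin - 2 * s) * (x - xs) >= 0) by nra.
      assert (2 * s * (1 - xs - y) >= s * (1 - xs)) by nra.
      assert (wmin * (c * xs - s) = 0) by (rewrite Hxs; ring).
      nra.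
    + assert ((c * wmin - 2 * s) * (x - (1 + d)) >= 0) by nra.
      assert (c * d * wmin >= 0) by (apply Rle_ge, Rmult_le_pos; [apply Rmult_le_pos|]; lra).
      assert (2 * s * y <= 2 * s * y0) by nra.
      nra.
Qed.

Lemma in_X0_of_pos_start tau phi psi : 0 <= tau ->
  in_X tau phi psi -> 0 < phi 0 -> 0 < psi 0 -> in_X0 tau phi psi.
Proof.
  intros Htau HX Hphi Hpsi; split; [exact HX|]; split; [exact Hphi|].
  exists 0; split; [lra | nra].
Qed.

Section Solution.

Variables (s Y tau : R) (phi psi x y : R -> R).
Hypotheses (hs : 0 < s) (hY : 0 < Y) (htau : 0 <= tau).
Hypothesis hX0 : in_X0 tau phi psi.
Hypothesis hsol : is_solution s Y tau phi psi x y.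

Local Notation c := (eff_yield s Y tau).

Lemma x_derive t : 0 < t -> is_derive x t (x t * (1 - x t) - y t * x t).
Proof. intros Ht; apply (proj2 (proj2 hsol) t Ht). Qed.

Lemma y_derive t : 0 < t -> is_derive y t (- s * y t + c * y (t - tau) * x (t - tau)).
Proof. intros Ht; apply (proj2 (proj2 hsol) t Ht). Qed.

Lemma x_cont t : - tau < t -> continuity_pt x t.
Proof.
  intros Ht; apply (continuity_pt_of_within_ge x (- tau)); [apply (proj1 (proj2 hsol)) | ]; lra.
Qed.

Lemma y_cont t : - tau < t -> continuity_pt y t.
Proof.
  intros Ht; apply (continuity_pt_of_within_ge y (- tau)); [apply (proj1 (proj2 hsol)) | ]; lra.
Qed.

Lemma x_pos_near t : - tau <= t -> 0 < x t ->
  exists d, 0 < d /\ forall u, - tau <= u -> Rabs (u - t) < d -> 0 < x u.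
Proof. intros Ht; apply pos_near_of_within_ge, (proj1 (proj2 hsol)), Ht. Qed.

Lemma y_pos_near t : - tau <= t -> 0 < y t ->
  exists d, 0 < d /\ forall u, - tau <= u -> Rabs (u - t) < d -> 0 < y u.
Proof. intros Ht; apply pos_near_of_within_ge, (proj1 (proj2 hsol)), Ht. Qed.

Lemma history_nonneg t : - tau <= t <= 0 -> 0 <= x t /\ 0 <= y t.
Proof.
  intros Ht; destruct (proj1 hsol t Ht) as [-> ->].
  destruct hX0 as [[_ [_ Hnn]] _]; apply Hnn, Ht.
Qed.

Lemma x_at_0_pos : 0 < x 0.
Proof. destruct (proj1 hsol 0 ltac:(lra)) as [-> _]; apply hX0. Qed.

Lemma start_cases : 0 < tau \/ 0 < y 0.
Proof.
  destruct (Rlt_le_dec 0 tau) as [|Htau0]; [now left | right].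
  destruct hX0 as [[_ [_ Hnn]] [_ [th [Hth Hprod]]]].
  replace th with 0 in * by lra.
  rewrite (proj2 (proj1 hsol 0 ltac:(lra))).
  destruct (Hnn 0 ltac:(lra)) as [_ Hpsi].
  destruct (Req_dec (psi 0) 0) as [E|]; [rewrite E in Hprod; lra | lra].
Qed.

Lemma x_pos t : 0 <= t -> 0 < x t.
Proof.
  destruct (x_pos_near 0 ltac:(lra) x_at_0_pos) as [d [Hd Hnear]].
  intros Ht; destruct (Rlt_le_dec t d) as [Htd|Htd].
  { apply Hnear; [lra | apply Rabs_def1; lra]. }
  set (g := fun r => 1 - x r - y r).
  assert (Hg : forall r, d / 2 <= r <= t -> continuity_pt g r).
  { intros r Hr; unfold g; repeat apply continuity_pt_minus;
      [apply continuity_pt_const; intros ? ?; reflexivity | apply x_cont | apply y_cont]; lra. }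
  (* the per-capita growth rate [1 - x - y] is bounded below on [[d/2, t]] *)
  destruct (continuity_ab_min g (d / 2) t ltac:(lra) Hg) as [rm [Hrm _]].
  apply (pos_of_derive_ge x (fun r => x r * (1 - x r) - y r * x r) (d / 2) t (Rabs (g rm)));
    try lra.
  - apply Hnear; [lra | apply Rabs_def1; lra].
  - intros r Hr; apply x_derive; lra.
  - intros r Hr Hxr; specialize (Hrm r Hr); unfold g in Hrm.
    assert (- Rabs (g rm) <= g rm) by (unfold Rabs; destruct Rcase_abs; lra).
    assert (0 <= x r * ((1 - x r - y r) + Rabs (g rm))) by (apply Rmult_le_pos; unfold g in *; lra).
    nra.
Qed.

Lemma x_nonneg t : - tau <= t -> 0 <= x t.
Proof.
  intros Ht; destruct (Rle_lt_dec 0 t).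
  - now apply Rlt_le, x_pos.
  - apply history_nonneg; lra.
Qed.

Lemma scaled_y_derive t : 0 < t ->
  is_derive (fun r => y r * exp (s * r)) t (exp (s * t) * (c * y (t - tau) * x (t - tau))).
Proof.
  intros Ht.
  assert (H := is_derive_Rmult y (fun r => exp (s * r)) t _ _ (y_derive t Ht) (is_derive_exp_scal s t)).
  replace (exp (s * t) * (c * y (t - tau) * x (t - tau))) with
    ((- s * y t + c * y (t - tau) * x (t - tau)) * exp (s * t) + y t * (s * exp (s * t))) by ring.
  exact H.
Qed.

Lemma scaled_y_continuous t : - tau < t -> continuity_pt (fun r => y r * exp (s * r)) t.
Proof.
  intros Ht; apply (continuity_pt_mult y (fun r => exp (s * r))); [now apply y_cont|].
  apply (continuity_pt_of_is_derive _ _ _ (is_derive_exp_scal s t)).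
Qed.

Lemma y_pos_no_delay : tau = 0 -> forall t, 0 <= t -> 0 < y t.
Proof.
  intros Htau0.
  assert (Hy0 : 0 < y 0) by (destruct start_cases; [lra | auto]).
  destruct (y_pos_near 0 ltac:(lra) Hy0) as [d [Hd Hnear]].
  intros t Ht; destruct (Rlt_le_dec t d) as [Htd|Htd].
  { apply Hnear; [lra | apply Rabs_def1; lra]. }
  apply (pos_of_derive_ge y (fun r => - s * y r + c * y (r - tau) * x (r - tau)) (d / 2) t s);
    try lra.
  - apply Hnear; [lra | apply Rabs_def1; lra].
  - intros r Hr; apply y_derive; lra.
  - intros r Hr Hyr; replace (r - tau) with r by lra.
    assert (0 < c) by (apply eff_yield_pos; auto).
    assert (0 <= x r) by (apply x_nonneg; lra).
    assert (0 <= c * y r * x r) by (apply Rmult_le_pos; [apply Rmult_le_pos|]; lra).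
    lra.
Qed.

(* Method of steps: on [[n tau, (n+1) tau]] the delayed terms are already known to be
   nonnegative, so [y e^{s t}] is nondecreasing there. *)
Lemma y_nonneg_steps : 0 < tau -> forall (n : nat) t, - tau <= t <= INR n * tau -> 0 <= y t.
Proof.
  intros Htau0 n; assert (0 < c) by (apply eff_yield_pos; auto).
  induction n as [|n IH]; intros t Ht.
  { apply history_nonneg; simpl in Ht; lra. }
  rewrite S_INR in Ht.
  assert (0 <= INR n * tau) by (apply Rmult_le_pos; [apply pos_INR | lra]).
  destruct (Rle_lt_dec t (INR n * tau)) as [|Hlt]; [apply IH; lra|].
  assert (Hmono : 0 * (t - INR n * tau) <=
            y t * exp (s * t) - y (INR n * tau) * exp (s * (INR n * tau))).
  { apply (MVT_diff_ge (fun r => y r * exp (s * r))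
             (fun r => exp (s * r) * (c * y (r - tau) * x (r - tau)))); try lra.
    - intros r Hr; apply scaled_y_derive; lra.
    - intros r Hr; apply scaled_y_continuous; lra.
    - intros r Hr; apply Rmult_le_pos; [apply Rlt_le, exp_pos|].
      apply Rmult_le_pos; [apply Rmult_le_pos; [lra | apply IH; lra] | apply x_nonneg; lra]. }
  assert (0 <= y (INR n * tau) * exp (s * (INR n * tau)))
    by (apply Rmult_le_pos; [apply IH; lra | apply Rlt_le, exp_pos]).
  assert (0 < exp (s * t)) by apply exp_pos.
  destruct (Rle_lt_dec 0 (y t)); auto; nra.
Qed.

Lemma y_nonneg t : - tau <= t -> 0 <= y t.
Proof.
  intros Ht; destruct (Rlt_le_dec 0 tau) as [Htau0|Htau0].
  - destruct (nfloor_ex ((t + tau) / tau)) as [n [_ Hn]]; [apply Rdiv_le_0_compat; lra|].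
    apply (y_nonneg_steps Htau0 (S n)); rewrite S_INR; split; [lra|].
    apply Rmult_lt_compat_r with (r := tau) in Hn; auto.
    unfold Rdiv in Hn; rewrite Rmult_assoc, Rinv_l in Hn by lra; lra.
  - destruct (Rle_lt_dec 0 t).
    + apply Rlt_le, y_pos_no_delay; lra.
    + apply history_nonneg; lra.
Qed.

Lemma scaled_y_nondecreasing a b : 0 < a <= b -> y a * exp (s * a) <= y b * exp (s * b).
Proof.
  intros Hab.
  assert (0 * (b - a) <= y b * exp (s * b) - y a * exp (s * a)); [|lra].
  apply (diff_ge_of_derive (fun r => y r * exp (s * r))
           (fun r => exp (s * r) * (c * y (r - tau) * x (r - tau)))); try lra.
  - intros r Hr; apply scaled_y_derive; lra.
  - intros r Hr; apply Rmult_le_pos; [apply Rlt_le, exp_pos|].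
    assert (0 <= y (r - tau)) by (apply y_nonneg; lra).
    assert (0 <= x (r - tau)) by (apply x_nonneg; lra).
    assert (0 < c) by (apply eff_yield_pos; auto).
    apply Rmult_le_pos; [apply Rmult_le_pos|]; lra.
Qed.

Lemma x_eventually_le d : 0 < d -> exists T, 0 < T /\ forall t, T <= t -> x t <= 1 + d.
Proof.
  intros Hd.
  destruct (eventually_ge_of_derive (fun r => - x r) (fun r => - (x r * (1 - x r) - y r * x r))
              0 (- (1 + d)) d Hd) as [T [HT HTge]].
  - intros t Ht; apply (is_derive_opp x), x_derive, Ht.
  - intros t Ht Hle; assert (0 <= y t) by (apply y_nonneg; lra); nra.
  - exists T; split; auto; intros t Ht; specialize (HTge t Ht); lra.
Qed.

(* [W t = c x (t - tau) + y t] satisfies [W' = c x_tau (1 - x_tau) - s y <= c/4 - s y], and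
   [x_tau <= 2] eventually, so [W' <= - s] as soon as [W >= y_bound]. *)
Definition y_bound : R := (2 * s * c + c / 4) / s + 1.

Lemma y_eventually_le : exists T, 0 < T /\ forall t, T <= t -> y t <= y_bound.
Proof.
  assert (Hc : 0 < c) by (apply eff_yield_pos; auto).
  destruct (x_eventually_le 1 ltac:(lra)) as [T2 [HT2 Hx2]].
  assert (HB : s * y_bound = 2 * s * c + c / 4 + s) by (unfold y_bound; field; lra).
  destruct (eventually_ge_of_derive (fun r => - (c * x (r - tau) + y r))
     (fun r => - (c * (x (r - tau) * (1 - x (r - tau)) - y (r - tau) * x (r - tau))
                 + (- s * y r + c * y (r - tau) * x (r - tau)))) (T2 + tau) (- y_bound) s hs)
    as [T [HT HTge]].
  - intros t Ht; apply (is_derive_opp (fun r => c * x (r - tau) + y r)).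
    apply (is_derive_plus (fun r => c * x (r - tau)) y); [|apply y_derive; lra].
    apply is_derive_scal, (is_derive_shift x), x_derive; lra.
  - intros t Ht Hle.
    assert (0 <= x (t - tau)) by (apply x_nonneg; lra).
    assert (x (t - tau) <= 1 + 1) by (apply Hx2; lra).
    assert (0 <= (x (t - tau) - 1 / 2) ^ 2) by apply pow2_ge_0.
    assert (x (t - tau) * (1 - x (t - tau)) <= 1 / 4) by nra.
    assert (c * (x (t - tau) * (1 - x (t - tau))) <= c * (1 / 4)) by (apply Rmult_le_compat_l; lra).
    assert (c * x (t - tau) <= 2 * c) by nra.
    assert (s * y t >= s * (y_bound - c * x (t - tau))) by (apply Rmult_ge_compat_l; lra).
    nra.
  - exists T; split; [lra|]; intros t Ht; specialize (HTge t Ht).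
    assert (0 <= x (t - tau)) by (apply x_nonneg; lra).
    assert (0 <= c * x (t - tau)) by (apply Rmult_le_pos; lra).
    lra.
Qed.

Lemma y_le_scaled r t : 0 < r <= t -> y r <= y t * exp (s * (t - r)).
Proof.
  intros Hrt; assert (Hmono := scaled_y_nondecreasing r t Hrt).
  assert (Hsplit : exp (s * t) = exp (s * r) * exp (s * (t - r)))
    by (rewrite <- exp_plus; f_equal; ring).
  assert (0 < exp (s * r)) by apply exp_pos.
  rewrite Hsplit in Hmono; nra.
Qed.

Lemma xy_continuous r : 0 < r -> continuity_pt (fun u => x u * y u) r.
Proof.
  intros Hr; apply (continuity_pt_mult x y); [apply x_cont | apply y_cont]; lra.
Qed.

(* [pool t = y t + c * RInt (x y) (t - tau) t]: the predators plus those still maturing.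
   It is written through the antiderivative based at [1] so that its derivative is
   read off directly for [t > tau]. *)
Definition pool (t : R) : R :=
  y t + c * (RInt (fun r => x r * y r) 1 t - RInt (fun r => x r * y r) 1 (t - tau)).

Definition pool_ratio : R := 1 + 2 * c * tau * exp (s * tau).

Lemma pool_derive t : tau < t -> is_derive pool t (y t * (c * x t - s)).
Proof.
  intros Ht.
  assert (HI : forall u, 0 < u -> is_derive (RInt (fun r => x r * y r) 1) u (x u * y u))
    by (intros u Hu; apply (is_derive_RInt_of_continuity_pos (fun r => x r * y r)); auto;
        exact xy_continuous).
  assert (H := is_derive_plus y (fun u => c * (RInt (fun r => x r * y r) 1 u
                                           - RInt (fun r => x r * y r) 1 (u - tau))) t _ _
                 (y_derive t ltac:(lra))
                 (is_derive_scal _ t c _ (is_derive_minus _ _ t _ _ (HI t ltac:(lra))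
                    (is_derive_shift _ tau t _ (HI (t - tau) ltac:(lra)))))).
  replace (y t * (c * x t - s)) with
    (- s * y t + c * y (t - tau) * x (t - tau) + c * (x t * y t - x (t - tau) * y (t - tau)))
    by ring.
  exact H.
Qed.

Lemma pool_ratio_ge_1 : 1 <= pool_ratio.
Proof.
  assert (0 < c) by (apply eff_yield_pos; auto).
  assert (0 <= 2 * c * tau * exp (s * tau)) by (apply Rmult_le_pos; [nra | apply Rlt_le, exp_pos]).
  unfold pool_ratio; lra.
Qed.

Lemma pool_bounds t : tau < t -> (forall r, t - tau <= r <= t -> x r <= 2) ->
  y t <= pool t <= pool_ratio * y t.
Proof.
  intros Ht Hx2.
  assert (Hc : 0 < c) by (apply eff_yield_pos; auto).
  assert (Hcont := xy_continuous).
  assert (Hex : ex_RInt (fun r => x r * y r) (t - tau) t)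
    by (apply ex_RInt_of_continuity_pos; auto; lra).
  assert (Hchasles : RInt (fun r => x r * y r) 1 t - RInt (fun r => x r * y r) 1 (t - tau)
                     = RInt (fun r => x r * y r) (t - tau) t).
  { rewrite <- (RInt_Chasles (V := R_CompleteNormedModule) (fun r => x r * y r) 1 (t - tau) t);
      try (apply ex_RInt_of_continuity_pos; auto; lra).
    change (plus ?a ?b) with (a + b); ring. }
  assert (Hint_ge : 0 <= RInt (fun r => x r * y r) (t - tau) t).
  { apply RInt_ge_0; auto; [lra|]; intros r Hr.
    apply Rmult_le_pos; [apply x_nonneg | apply y_nonneg]; lra. }
  assert (Hint_le : RInt (fun r => x r * y r) (t - tau) t <= tau * (2 * exp (s * tau) * y t)).
  { replace (tau * (2 * exp (s * tau) * y t))
      with (RInt (fun _ => 2 * exp (s * tau) * y t) (t - tau) t)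
      by (rewrite (RInt_const (V := R_CompleteNormedModule)); change (scal ?a ?b) with (a * b); 
          f_equal; ring).
    apply RInt_le; auto; [lra | apply ex_RInt_const|]; intros r Hr.
    assert (0 <= x r) by (apply x_nonneg; lra).
    assert (0 <= y r) by (apply y_nonneg; lra).
    assert (y r <= y t * exp (s * tau)).
    { apply Rle_trans with (y t * exp (s * (t - r))); [apply y_le_scaled; lra|].
      apply Rmult_le_compat_l; [apply y_nonneg; lra | apply exp_le; nra]. }
    assert (x r <= 2) by (apply Hx2; lra).
    nra. }
  unfold pool, pool_ratio; rewrite Hchasles.
  assert (0 <= y t) by (apply y_nonneg; lra).
  assert (0 <= c * RInt (fun r => x r * y r) (t - tau) t) by (apply Rmult_le_pos; lra).
  assert (c * RInt (fun r => x r * y r) (t - tau) t <= c * (tau * (2 * exp (s * tau) * y t)))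
    by (apply Rmult_le_compat_l; lra).
  split; nra.
Qed.

(* With a delay, [y] can only start growing [tau] after the first time [x y > 0] in the
   history; [X0] guarantees such a time [theta]. *)
Lemma y_eventually_pos : exists T, 0 < T /\ forall t, T <= t -> 0 < y t.
Proof.
  destruct (Rlt_le_dec 0 tau) as [Htau0|Htau0].
  2: { exists 1; split; [lra|]; intros t Ht; apply y_pos_no_delay; lra. }
  assert (Hc : 0 < c) by (apply eff_yield_pos; auto).
  destruct hX0 as [[_ [_ Hnn]] [_ [th [Hth Hprod]]]].
  destruct (proj1 hsol th Hth) as [Exth Eyth].
  destruct (Hnn th Hth) as [Hphi Hpsi].
  assert (Hxth : 0 < x th)
    by (rewrite Exth; destruct (Req_dec (phi th) 0) as [E|]; [rewrite E in Hprod |]; lra).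
  assert (Hyth : 0 < y th)
    by (rewrite Eyth; destruct (Req_dec (psi th) 0) as [E|]; [rewrite E in Hprod |]; lra).
  destruct (x_pos_near th ltac:(lra) Hxth) as [dx [Hdx Hxnear]].
  destruct (y_pos_near th ltac:(lra) Hyth) as [dy [Hdy Hynear]].
  set (d := Rmin dx dy / 2).
  assert (Hd : 0 < d /\ d < dx /\ d < dy).
  { assert (Rmin dx dy <= dx) by apply Rmin_l; assert (Rmin dx dy <= dy) by apply Rmin_r.
    assert (0 < Rmin dx dy) by (apply Rmin_glb_lt; auto); unfold d; lra. }
  assert (Hprod_pos : forall r, th <= r <= th + d -> 0 < x r * y r).
  { intros r Hr; apply Rmult_lt_0_compat;
      [apply Hxnear | apply Hynear]; try lra; apply Rabs_def1; lra. }
  set (a := th + tau); set (b := th + d + tau).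
  set (z := fun r => y r * exp (s * r)).
  destruct (MVT_gen z a b (fun r => exp (s * r) * (c * y (r - tau) * x (r - tau))))
    as [xi [Hxi Hmvt]]; rewrite ?Rmin_left, ?Rmax_right in * by (unfold a, b; lra).
  - intros r Hr; apply scaled_y_derive; unfold a in Hr; lra.
  - intros r Hr; apply scaled_y_continuous; unfold a in Hr; lra.
  - assert (Hxi_pos : 0 < exp (s * xi) * (c * y (xi - tau) * x (xi - tau))).
    { apply Rmult_lt_0_compat; [apply exp_pos|].
      assert (H := Hprod_pos (xi - tau) ltac:(unfold a, b in Hxi; lra)); nra. }
    assert (Hza : 0 <= z a)
      by (apply Rmult_le_pos; [apply y_nonneg; unfold a; lra | apply Rlt_le, exp_pos]).
    assert (Hzb : 0 < z b).
    { assert (0 < exp (s * xi) * (c * y (xi - tau) * x (xi - tau)) * (b - a))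
        by (apply Rmult_lt_0_compat; [auto | unfold a, b; lra]).
      lra. }
    exists b; split; [unfold b; lra|]; intros t Ht.
    assert (Hmono := scaled_y_nondecreasing b t ltac:(unfold b in *; lra)).
    fold (z b) in Hmono; assert (0 < exp (s * t)) by apply exp_pos.
    destruct (Rlt_le_dec 0 (y t)); auto; nra.
Qed.

Lemma ln_x_derive t : 0 < t -> is_derive (fun r => ln (x r)) t (1 - x t - y t).
Proof.
  intros Ht; assert (Hx := x_pos t ltac:(lra)).
  replace (1 - x t - y t) with ((x t * (1 - x t) - y t * x t) / x t) by (field; lra).
  apply is_derive_ln_comp, x_derive; auto.
Qed.

Lemma x_tends_1_of_y_vanishes :
  (forall e, 0 < e -> exists T, forall t, T <= t -> y t < e) -> is_lim x p_infty 1.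
Proof.
  intros Hy; apply is_lim_p_infty_intro; intros e He.
  destruct (x_eventually_le (e / 2) ltac:(lra)) as [T1 [HT1 Hup]].
  set (e' := Rmin (e / 2) (1 / 2)).
  assert (He' : 0 < e' /\ e' <= e / 2 /\ e' <= 1 / 2) by (unfold e'; apply Rmin_case_strong; lra).
  destruct (Hy (e' / 2) ltac:(lra)) as [T2 HT2].
  destruct (eventually_ge_of_derive (fun r => ln (x r)) (fun r => 1 - x r - y r)
              (Rmax 0 T2) (ln (1 - e')) (e' / 2) ltac:(lra)) as [T3 [HT3 Hlow]].
  - intros t Ht; apply ln_x_derive; assert (Hm := Rmax_l 0 T2); lra.
  - intros t Ht Hle; assert (Hm := Rmax_l 0 T2); assert (Hm2 := Rmax_r 0 T2).
    assert (x t <= 1 - e') by (apply ln_le_inv; auto; [apply x_pos | ]; lra).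
    specialize (HT2 t ltac:(lra)); lra.
  - exists (Rmax T1 T3); intros t Ht.
    assert (Hm := Rmax_l T1 T3); assert (Hm2 := Rmax_r T1 T3).
    assert (Hm3 := Rmax_l 0 T2).
    specialize (Hup t ltac:(lra)); specialize (Hlow t ltac:(lra)).
    assert (1 - e' <= x t) by (apply ln_le_inv; auto; [lra | apply x_pos; lra]).
    apply Rabs_def1; lra.
Qed.

Section Subcritical.

Hypothesis hsub : c < s.

(* With [k = (s - c) / 2]: [pool' = y (c x - s) <= - k y <= - (k / pool_ratio) pool]
   once [x <= 1 + d]. *)
Lemma y_vanishes : forall e, 0 < e -> exists T, forall t, T <= t -> y t < e.
Proof.
  assert (Hc : 0 < c) by (apply eff_yield_pos; auto).
  set (d := Rmin 1 ((s - c) / (2 * c))).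
  assert (Hd : 0 < d /\ d <= 1 /\ c * (1 + d) <= (s + c) / 2).
  { assert (c * ((s - c) / (2 * c)) = (s - c) / 2) by (field; lra).
    assert (0 < (s - c) / (2 * c)) by (apply Rdiv_lt_0_compat; lra).
    unfold d; apply Rmin_case_strong; intros Hm; repeat split; try lra.
    assert (c * 1 <= c * ((s - c) / (2 * c))) by (apply Rmult_le_compat_l; lra); lra. }
  destruct (x_eventually_le d ltac:(lra)) as [Tx [HTx Hxle]].
  assert (HK := pool_ratio_ge_1).
  set (K := pool_ratio) in *; set (k := (s - c) / 2).
  set (TP := Tx + tau + 1).
  assert (Hbounds : forall t, TP <= t -> y t <= pool t <= K * y t).
  { intros t Ht; apply pool_bounds; unfold TP in Ht; [lra|].
    intros r Hr; specialize (Hxle r ltac:(lra)); lra. }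
  assert (Hdecay : forall t, TP <= t -> pool t <= pool TP * exp (- (k / K) * (t - TP))).
  { apply (exp_decay_of_derive pool (fun t => y t * (c * x t - s))).
    - intros t Ht; apply pool_derive; unfold TP in Ht; lra.
    - intros t Ht; destruct (Hbounds t Ht) as [H1 H2].
      assert (0 <= y t) by (apply y_nonneg; unfold TP in Ht; lra).
      assert (x t <= 1 + d) by (apply Hxle; unfold TP in Ht; lra).
      assert (c * x t - s <= - k) by (unfold k; nra).
      assert (y t * (c * x t - s) <= - k * y t) by nra.
      assert (k / K * pool t <= k * y t).
      { apply Rmult_le_reg_r with K; [lra|].
        replace (k / K * pool t * K) with (k * pool t) by (field; lra).
        unfold k in *; nra. }
      lra. }
  intros e He.
  assert (HA : 0 <= pool TP).
  { destruct (Hbounds TP ltac:(lra)).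
    assert (0 <= y TP) by (apply y_nonneg; unfold TP; lra); lra. }
  assert (Hk : 0 < k / K) by (apply Rdiv_lt_0_compat; unfold k; lra).
  destruct (exp_decay_eventually_lt (pool TP) (k / K) TP e HA Hk He) as [T [HT Hsmall]].
  exists T; intros t Ht.
  destruct (Hbounds t ltac:(lra)) as [Hyp _].
  specialize (Hdecay t ltac:(lra)); specialize (Hsmall t Ht); lra.
Qed.

Lemma extinction : is_lim x p_infty 1 /\ is_lim y p_infty 0.
Proof.
  split; [apply x_tends_1_of_y_vanishes, y_vanishes|].
  apply is_lim_p_infty_intro; intros e He.
  destruct (y_vanishes e He) as [T HT]; exists (Rmax T 0); intros t Ht.
  assert (Hm := Rmax_l T 0); assert (Hm2 := Rmax_r T 0).
  assert (0 <= y t) by (apply y_nonneg; lra).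
  specialize (HT t ltac:(lra)); apply Rabs_def1; lra.
Qed.

End Subcritical.

Section Supercritical.

Hypothesis hsup : s < c.

(* Below [x_level], [ln x - pool / (s/2)] increases at rate at least [1/2]; below
   [y_level], [ln pool + 2 s ln x] increases at rate at least [y_rate].  Both are bounded
   above (by means of [pool_max]), so once [x] (resp. [y]) has crossed its level it can
   never fall below [x_floor] (resp. [y_floor]). *)
Definition x_level : R := s / (2 * c).
Definition pool_max : R := pool_ratio * y_bound.
Definition x_floor : R := x_level * exp (- (pool_max / (s / 2))).
Definition x_margin : R := Rmin 1 ((c - s) / (8 * s * pool_ratio)).
Definition y_level : R :=
  Rmin (1 / 4) (Rmin ((1 - s / c) / 2) ((c - s) / (8 * s * pool_ratio))).
Definition y_rate : R := Rmin (s / 2) (Rmin (s * (1 - s / c)) ((c - s) / (2 * pool_ratio))).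
Definition y_floor : R := exp (ln y_level + 2 * s * ln x_floor - 2 * s * ln 2) / pool_ratio.
Definition persistence_eps : R := Rmin (x_floor / 2) (y_floor / 2).

Lemma y_bound_pos : 0 < y_bound.
Proof.
  assert (0 < c) by (apply eff_yield_pos; auto).
  assert (0 < (2 * s * c + c / 4) / s) by (apply Rdiv_lt_0_compat; nra).
  unfold y_bound; lra.
Qed.

Lemma x_level_bounds : 0 < x_level < 1 / 2.
Proof.
  unfold x_level; split; [apply Rdiv_lt_0_compat; lra|].
  apply Rmult_lt_reg_r with (2 * c); [lra|].
  replace (s / (2 * c) * (2 * c)) with s by (field; lra); lra.
Qed.

Lemma x_floor_bounds : 0 < x_floor <= x_level.
Proof.
  assert (HK := pool_ratio_ge_1); assert (HB := y_bound_pos); assert (Hl := x_level_bounds).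
  assert (0 <= pool_max / (s / 2)) by (apply Rdiv_le_0_compat; unfold pool_max; nra).
  assert (exp (- (pool_max / (s / 2))) <= 1) by (rewrite <- exp_0; apply exp_le; lra).
  assert (0 < exp (- (pool_max / (s / 2)))) by apply exp_pos.
  unfold x_floor; split; nra.
Qed.

Lemma one_sub_s_div_c_pos : 0 < 1 - s / c.
Proof.
  assert (s / c < 1); [|lra].
  apply Rmult_lt_reg_r with c; [lra|]; replace (s / c * c) with s by (field; lra); lra.
Qed.

Lemma gap_ratio_pos : 0 < (c - s) / (8 * s * pool_ratio).
Proof. assert (HK := pool_ratio_ge_1); apply Rdiv_lt_0_compat; nra. Qed.

Lemma x_margin_bounds : 0 < x_margin <= 1.
Proof. assert (H := gap_ratio_pos); unfold x_margin; apply Rmin_case_strong; lra. Qed.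

Lemma y_level_pos : 0 < y_level.
Proof.
  assert (H1 := gap_ratio_pos); assert (H2 := one_sub_s_div_c_pos).
  unfold y_level; repeat apply Rmin_glb_lt; lra.
Qed.

Lemma y_rate_pos : 0 < y_rate.
Proof.
  assert (HK := pool_ratio_ge_1); assert (H := one_sub_s_div_c_pos).
  unfold y_rate; repeat apply Rmin_glb_lt; [lra | nra | apply Rdiv_lt_0_compat; lra].
Qed.

Lemma y_floor_bounds : 0 < y_floor <= y_level.
Proof.
  assert (HK := pool_ratio_ge_1); assert (Hy := y_level_pos).
  assert (Hx := x_floor_bounds); assert (Hl := x_level_bounds).
  set (E := exp (ln y_level + 2 * s * ln x_floor - 2 * s * ln 2)).
  assert (HE : 0 < E) by apply exp_pos.
  assert (ln x_floor <= ln 2) by (apply ln_le; lra).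
  assert (E <= y_level)
    by (unfold E; rewrite <- (exp_ln y_level) at 2 by lra; apply exp_le; nra).
  assert (E / pool_ratio <= E).
  { apply Rmult_le_reg_r with pool_ratio; [lra|].
    unfold Rdiv; rewrite Rmult_assoc, Rinv_l by lra; nra. }
  unfold y_floor; fold E; split; [apply Rdiv_lt_0_compat|]; lra.
Qed.

Lemma persistence_eps_pos : 0 < persistence_eps.
Proof.
  assert (H1 := x_floor_bounds); assert (H2 := y_floor_bounds).
  unfold persistence_eps; apply Rmin_glb_lt; lra.
Qed.

Lemma persistence_regime : exists Ts, tau < Ts /\ forall t, Ts <= t ->
  0 < x t <= 1 + x_margin /\ 0 < y t <= y_bound /\ y t <= pool t <= pool_ratio * y t.
Proof.
  assert (Hm := x_margin_bounds).
  destruct y_eventually_pos as [Ty [HTy Hypos]].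
  destruct (x_eventually_le x_margin ltac:(lra)) as [Tx [HTx Hxle]].
  destruct y_eventually_le as [TB [HTB Hyle]].
  set (T := Rmax Ty (Rmax Tx TB)).
  assert (Ty <= T /\ Tx <= T /\ TB <= T) as [Ha [Hb Hc]]
    by (unfold T, Rmax; repeat destruct Rle_dec; lra).
  exists (T + tau + 1); split; [lra|]; intros t Ht.
  assert (Hx2 : forall r, t - tau <= r <= t -> x r <= 2)
    by (intros r Hr; assert (H := Hxle r ltac:(lra)); lra).
  split; [split; [apply x_pos; lra | apply Hxle; lra]|].
  split; [split; [apply Hypos; lra | apply Hyle; lra]|].
  apply pool_bounds; [lra | exact Hx2].
Qed.

Lemma x_persists : exists T, forall t, T <= t -> x_floor <= x t.
Proof.
  destruct persistence_regime as [Ts [HTs Hreg]].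
  assert (Hl := x_level_bounds); assert (Hf := x_floor_bounds); assert (Hm := x_margin_bounds).
  assert (HK := pool_ratio_ge_1).
  set (k := s / 2).
  assert (Hck : c * x_level = k) by (unfold x_level, k; field; apply Rgt_not_eq, eff_yield_pos; auto).
  destruct (persistence_crossing x (fun t => ln (x t) - / k * pool t)
      (fun t => (1 - x t - y t) - / k * (y t * (c * x t - s))) Ts x_level (1 / 2) (ln 2))
    as [t0 [Ht0 Hcross]].
  - lra.
  - intros t Ht; apply x_cont; lra.
  - intros t Ht; apply (is_derive_minus (fun r => ln (x r)) (fun r => / k * pool r));
      [apply ln_x_derive | apply is_derive_scal, pool_derive]; lra.
  - intros t Ht Hle; destruct (Hreg t ltac:(lra)) as [Hx [Hy _]].
    assert (c * x t <= k) by (rewrite <- Hck; apply Rmult_le_compat_l; [apply Rlt_le, eff_yield_pos|]; lra).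
    assert (y t * (c * x t - s) <= - k * y t) by (unfold k in *; nra).
    assert (/ k * (y t * (c * x t - s)) <= / k * (- k * y t))
      by (apply Rmult_le_compat_l; [apply Rlt_le, Rinv_0_lt_compat; unfold k; lra | auto]).
    replace (/ k * (- k * y t)) with (- y t) in * by (field; unfold k; lra).
    lra.
  - intros t Ht _; destruct (Hreg t ltac:(lra)) as [Hx [Hy Hp]].
    assert (ln (x t) <= ln 2) by (apply ln_le; lra).
    assert (0 <= / k * pool t) by (apply Rmult_le_pos; [apply Rlt_le, Rinv_0_lt_compat; unfold k|]; lra).
    lra.
  - exists t0; intros t Ht.
    destruct (Rlt_le_dec (x t) x_level) as [Hlt|]; [|lra].
    destruct (Hcross t Ht Hlt) as [S [HS [HxS HG]]].
    destruct (Hreg S ltac:(lra)) as [_ [[HyS HyS'] [_ HpS]]].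
    destruct (Hreg t ltac:(lra)) as [[Hxt _] [[Hyt _] [Hpt _]]].
    rewrite HxS in HG.
    assert (pool S <= pool_max) by (unfold pool_max; nra).
    assert (/ k * pool S <= pool_max / k)
      by (unfold Rdiv; rewrite Rmult_comm; apply Rmult_le_compat_r;
          [apply Rlt_le, Rinv_0_lt_compat; unfold k|]; lra).
    assert (0 <= / k * pool t) by (apply Rmult_le_pos; [apply Rlt_le, Rinv_0_lt_compat; unfold k|]; lra).
    unfold x_floor; fold k.
    rewrite <- (exp_ln x_level), <- exp_plus, <- (exp_ln (x t)) by lra.
    apply exp_le; lra.
Qed.

Lemma log_pool_growth (u v p : R) :
  0 < u <= 1 + x_margin -> 0 < v <= y_level -> v <= p <= pool_ratio * v ->
  y_rate <= v * (c * u - s) / p + 2 * s * (1 - u - v).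
Proof.
  intros Hu Hv Hp.
  assert (HK := pool_ratio_ge_1); set (K := pool_ratio) in *.
  assert (Hw : / K <= v / p <= 1).
  { split.
    - apply Rmult_le_reg_r with (K * p); [nra|].
      replace (/ K * (K * p)) with p by (field; lra).
      replace (v / p * (K * p)) with (K * v) by (field; lra); lra.
    - apply Rmult_le_reg_r with p; [lra|].
      replace (v / p * p) with v by (field; lra); lra. }
  assert (Hgap : forall r, r <= (c - s) / (8 * s * K) -> 8 * s * r <= (c - s) * / K).
  { intros r Hr; apply Rmult_le_compat_l with (r := 8 * s) in Hr; [|lra].
    replace (8 * s * ((c - s) / (8 * s * K))) with ((c - s) * / K) in Hr by (field; lra).
    auto. }
  assert (HK' : 0 < / K <= 1).
  { split; [apply Rinv_0_lt_compat; lra|]; rewrite <- Rinv_1; apply Rinv_le_contravar; lra. }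
  assert (Hm := x_margin_bounds).
  replace (v * (c * u - s) / p) with (v / p * (c * u - s)) by (field; lra).
  apply (persistence_rate_ineq c s (/ K) x_margin y_level); try lra;
    unfold x_margin, y_level, y_rate; fold K.
  - apply Hgap, Rmin_r.
  - apply Hgap; eapply Rle_trans; apply Rmin_r.
  - apply Rmin_l.
  - eapply Rle_trans; [apply Rmin_r | apply Rmin_l].
  - apply Rmin_l.
  - eapply Rle_trans; [apply Rmin_r | apply Rmin_l].
  - eapply Rle_trans; [apply Rmin_r|]; eapply Rle_trans; [apply Rmin_r|]; right; field; lra.
Qed.

Lemma y_persists : exists T, forall t, T <= t -> y_floor <= y t.
Proof.
  destruct persistence_regime as [Ts [HTs Hreg]].
  destruct x_persists as [Tx Hxfloor].
  assert (HK := pool_ratio_ge_1); assert (Hm := x_margin_bounds); assert (Hf := x_floor_bounds).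
  assert (Hy0 := y_level_pos); assert (Hr := y_rate_pos); assert (HB := y_bound_pos).
  set (K := pool_ratio) in *.
  set (T := Rmax Ts Tx).
  assert (Ts <= T /\ Tx <= T) as [HT1 HT2] by (unfold T, Rmax; destruct Rle_dec; lra).
  destruct (persistence_crossing y (fun t => ln (pool t) + 2 * s * ln (x t))
      (fun t => y t * (c * x t - s) / pool t + 2 * s * (1 - x t - y t)) T y_level y_rate
      (ln pool_max + 2 * s * ln 2)) as [t0 [Ht0 Hcross]]; auto.
  - intros t Ht; apply y_cont; lra.
  - intros t Ht; destruct (Hreg t ltac:(lra)) as [_ [[Hy _] [Hp _]]].
    apply (is_derive_plus (fun r => ln (pool r)) (fun r => 2 * s * ln (x r)));
      [apply is_derive_ln_comp, pool_derive | apply is_derive_scal, ln_x_derive]; lra.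
  - intros t Ht Hle; destruct (Hreg t ltac:(lra)) as [Hx [Hy Hp]].
    apply log_pool_growth; auto; lra.
  - intros t Ht _; destruct (Hreg t ltac:(lra)) as [Hx [Hy [Hp1 Hp2]]].
    assert (ln (pool t) <= ln pool_max) by (apply ln_le; [lra | unfold pool_max; fold K; nra]).
    assert (ln (x t) <= ln 2) by (apply ln_le; lra).
    assert (2 * s * ln (x t) <= 2 * s * ln 2) by (apply Rmult_le_compat_l; lra).
    lra.
  - exists t0; intros t Ht.
    destruct (Rlt_le_dec (y t) y_level) as [Hlt|]; [|assert (H := y_floor_bounds); lra].
    destruct (Hcross t Ht Hlt) as [S [HS [HyS HG]]].
    destruct (Hreg S ltac:(lra)) as [[HxS _] [_ [HpS _]]].
    destruct (Hreg t ltac:(lra)) as [[Hxt Hxt'] [[Hyt _] [Hpt1 Hpt2]]].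
    assert (ln y_level <= ln (pool S)) by (apply ln_le; lra).
    assert (ln x_floor <= ln (x S)) by (apply ln_le; [lra | apply Hxfloor; lra]).
    assert (ln (x t) <= ln 2) by (apply ln_le; lra).
    assert (2 * s * ln x_floor <= 2 * s * ln (x S)) by (apply Rmult_le_compat_l; lra).
    assert (2 * s * ln (x t) <= 2 * s * ln 2) by (apply Rmult_le_compat_l; lra).
    assert (Hlnp : ln y_level + 2 * s * ln x_floor - 2 * s * ln 2 <= ln (pool t)) by lra.
    apply exp_le in Hlnp; rewrite exp_ln in Hlnp by lra.
    unfold y_floor; fold K.
    apply Rmult_le_reg_r with K; [lra|].
    unfold Rdiv; rewrite Rmult_assoc, Rinv_l by lra; lra.
Qed.

Lemma uniform_persistence :
  liminf_gt x persistence_eps /\ liminf_gt y persistence_eps.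
Proof.
  assert (Hx := x_floor_bounds); assert (Hy := y_floor_bounds).
  assert (Hmx := Rmin_l (x_floor / 2) (y_floor / 2)).
  assert (Hmy := Rmin_r (x_floor / 2) (y_floor / 2)).
  destruct x_persists as [Tx HTx]; destruct y_persists as [Ty HTy].
  split; [exists x_floor | exists y_floor]; unfold persistence_eps;
    (split; [lra | eexists; eauto]).
Qed.

Section NoDelay.

Hypothesis hnodelay : tau = 0.

Local Notation xs := (x_plus s Y tau).
Local Notation ys := (y_plus s Y tau).

Lemma y_derive_no_delay t : 0 < t -> is_derive y t (- s * y t + c * y t * x t).
Proof. intros Ht; assert (H := y_derive t Ht); now replace (t - tau) with t in H by lra. Qed.

Lemma coexistence_equilibrium_props : c * xs = s /\ ys = 1 - xs /\ 0 < xs /\ 0 < ys.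
Proof.
  assert (Hc : 0 < c) by (apply eff_yield_pos; auto).
  assert (Hpos := proj2 (E_plus_pos_iff s Y tau hs hY) (proj2 (tau_lt_tau_c_iff s Y tau hs hY) hsup)).
  assert (Hxs : xs = s / c) by (apply x_plus_eq; auto).
  repeat split; try tauto; rewrite Hxs; field; lra.
Qed.

Definition lyapunov (t : R) : R := x t - xs * ln (x t) + / c * (y t - ys * ln (y t)).

Lemma lyapunov_derive t : 0 < t -> is_derive lyapunov t (- (x t - xs) ^ 2).
Proof.
  intros Ht; destruct coexistence_equilibrium_props as [Hcx [Hys _]].
  assert (Hc : 0 < c) by (apply eff_yield_pos; auto).
  assert (Hx := x_pos t ltac:(lra)); assert (Hy := y_pos_no_delay hnodelay t ltac:(lra)).
  assert (Hdx := x_derive t Ht); assert (Hdy := y_derive_no_delay t Ht).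
  assert (H := is_derive_plus _ _ t _ _
    (is_derive_minus _ _ t _ _ Hdx (is_derive_scal _ t xs _ (is_derive_ln_comp x t _ Hx Hdx)))
    (is_derive_scal _ t (/ c) _
       (is_derive_minus _ _ t _ _ Hdy (is_derive_scal _ t ys _ (is_derive_ln_comp y t _ Hy Hdy))))).
  replace (- (x t - xs) ^ 2) with
    (x t * (1 - x t) - y t * x t - xs * ((x t * (1 - x t) - y t * x t) / x t) +
     / c * (- s * y t + c * y t * x t - ys * ((- s * y t + c * y t * x t) / y t))).
  - exact H.
  - set (C := c) in *; set (XS := xs) in *; set (YS := ys) in *; clearbody C XS YS.
    rewrite Hys, <- Hcx; field; lra.
Qed.

Lemma lyapunov_cauchy : cauchy_at_infty lyapunov.
Proof.
  destruct coexistence_equilibrium_props as [_ [_ [Hxs Hys]]].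
  assert (Hc : 0 < c) by (apply eff_yield_pos; auto).
  apply (cauchy_at_infty_of_nonincreasing lyapunov 1
           ((xs - xs * ln xs) + / c * (ys - ys * ln ys))).
  - intros a b Hab.
    assert (lyapunov b - lyapunov a <= 0 * (b - a)); [|lra].
    apply (diff_le_of_derive lyapunov (fun t => - (x t - xs) ^ 2)); try lra.
    + intros t Ht; apply lyapunov_derive; lra.
    + intros t Ht; assert (0 <= (x t - xs) ^ 2) by apply pow2_ge_0; lra.
  - intros t Ht; unfold lyapunov.
    assert (H1 := sub_mul_ln_ge xs (x t) Hxs (x_pos t ltac:(lra))).
    assert (H2 := sub_mul_ln_ge ys (y t) Hys (y_pos_no_delay hnodelay t ltac:(lra))).
    assert (/ c * (ys - ys * ln ys) <= / c * (y t - ys * ln (y t)))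
      by (apply Rmult_le_compat_l; [apply Rlt_le, Rinv_0_lt_compat|]; lra).
    lra.
Qed.

Lemma eventually_lipschitz : exists T0 K, 0 < K /\ forall a b, T0 <= a -> a <= b ->
  Rabs (x b - x a) <= K * (b - a) /\ Rabs (y b - y a) <= K * (b - a).
Proof.
  assert (Hc : 0 < c) by (apply eff_yield_pos; auto).
  assert (HB := y_bound_pos).
  destruct (x_eventually_le 1 ltac:(lra)) as [T1 [HT1 Hx2]].
  destruct y_eventually_le as [T2 [HT2 HyB]].
  set (T0 := Rmax T1 T2); set (K := (1 + y_bound) * (3 + s + 2 * c)).
  assert (Hbox : forall t, T0 <= t -> 0 < t /\ 0 < x t <= 2 /\ 0 < y t <= y_bound).
  { intros t Ht; assert (Hm1 := Rmax_l T1 T2); assert (Hm2 := Rmax_r T1 T2); fold T0 in Hm1, Hm2.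
    assert (x t <= 1 + 1) by (apply Hx2; lra).
    repeat split; try lra; [apply x_pos | apply y_pos_no_delay | apply HyB]; auto; lra. }
  exists T0, K; split; [unfold K; nra|]; intros a b Ha Hab; split.
  - apply (lipschitz_of_derive x (fun t => x t * (1 - x t) - y t * x t) T0); auto.
    + intros t Ht; apply x_derive, Hbox, Ht.
    + intros t Ht; destruct (Hbox t Ht) as [_ [[Hx Hx'] [Hy Hy']]].
      apply Rabs_le_between; unfold K; split; nra.
  - apply (lipschitz_of_derive y (fun t => - s * y t + c * y t * x t) T0); auto.
    + intros t Ht; apply y_derive_no_delay, Hbox, Ht.
    + intros t Ht; destruct (Hbox t Ht) as [_ [[Hx Hx'] [Hy Hy']]].
      assert (0 <= c * y t * x t <= c * y_bound * 2).
      { split; [apply Rmult_le_pos; [apply Rmult_le_pos|]; lra|].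
        apply Rmult_le_compat; [apply Rmult_le_pos | | apply Rmult_le_compat_l |]; lra. }
      assert (0 <= s * y t <= s * y_bound) by (split; [apply Rmult_le_pos | apply Rmult_le_compat_l]; lra).
      apply Rabs_le_between; unfold K; split; nra.
Qed.

Lemma x_tends_x_plus : forall e, 0 < e -> exists T, forall t, T <= t -> Rabs (x t - xs) < e.
Proof.
  destruct eventually_lipschitz as [T0 [K [HK Hlip]]].
  assert (Hdrop : forall e, 0 < e -> exists d T, 0 < d /\ forall t, T <= t ->
            e <= Rabs (x t - xs) -> - (x t - xs) ^ 2 <= - d).
  { intros e He; exists (e * e), (Rmax T0 1); split; [nra|]; intros t Ht Hu.
    assert (Rsqr e <= Rsqr (x t - xs))
      by (apply Rsqr_le_abs_1; rewrite (Rabs_pos_eq e) by lra; exact Hu).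
    unfold Rsqr in *; lra. }
  assert (Hder : forall t, Rmax T0 1 <= t -> is_derive lyapunov t (- (x t - xs) ^ 2))
    by (intros t Ht; apply lyapunov_derive; assert (Hm := Rmax_r T0 1); lra).
  assert (HT0 := Rmax_l T0 1).
  apply abs_lt_of_one_sided.
  - apply (barbalat lyapunov _ (fun t => x t - xs) (Rmax T0 1) K HK lyapunov_cauchy Hder).
    + intros a b Ha Hab; replace (x b - xs - (x a - xs)) with (x b - x a) by ring.
      apply Hlip; lra.
    + intros e He; destruct (Hdrop e He) as [d [T [Hd HT]]]; exists d, T; split; auto.
      intros t Ht Hu; apply HT; auto; apply Rle_trans with (x t - xs); [lra | apply RRle_abs].
  - apply (barbalat lyapunov _ (fun t => xs - x t) (Rmax T0 1) K HK lyapunov_cauchy Hder).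
    + intros a b Ha Hab; replace (xs - x b - (xs - x a)) with (- (x b - x a)) by ring.
      rewrite Rabs_Ropp; apply Hlip; lra.
    + intros e He; destruct (Hdrop e He) as [d [T [Hd HT]]]; exists d, T; split; auto.
      intros t Ht Hu; apply HT; auto.
      rewrite <- Rabs_Ropp; apply Rle_trans with (- (x t - xs)); [lra | apply RRle_abs].
Qed.

(* Since [xs + ys = 1], [x' = x ((xs - x) + (ys - y))]. *)
Lemma x_drift_near_x_plus : forall e, 0 < e -> exists T, forall t, T <= t ->
  (e <= y t - ys -> x t * (1 - x t) - y t * x t <= - (xs * e / 4)) /\
  (e <= ys - y t -> xs * e / 4 <= x t * (1 - x t) - y t * x t).
Proof.
  destruct coexistence_equilibrium_props as [_ [Hys [Hxs _]]].
  intros e He; destruct (x_tends_x_plus (Rmin (e / 2) (xs / 2))) as [T HT];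
    [apply Rmin_glb_lt; lra|].
  exists T; intros t Ht; assert (Hclose := HT t Ht).
  assert (Hm1 := Rmin_l (e / 2) (xs / 2)); assert (Hm2 := Rmin_r (e / 2) (xs / 2)).
  apply Rabs_def2 in Hclose.
  replace (x t * (1 - x t) - y t * x t) with (x t * ((xs - x t) + (ys - y t))) by (rewrite Hys; ring).
  split; intros Hy.
  - assert (x t * ((xs - x t) + (ys - y t)) <= x t * (- e / 2)) by (apply Rmult_le_compat_l; lra).
    nra.
  - assert (x t * (e / 2) <= x t * ((xs - x t) + (ys - y t))) by (apply Rmult_le_compat_l; lra).
    nra.
Qed.

(* As [x] converges, Barbalat's argument applies to [x] and to [- x]. *)
Lemma y_tends_y_plus : forall e, 0 < e -> exists T, forall t, T <= t -> Rabs (y t - ys) < e.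
Proof.
  destruct coexistence_equilibrium_props as [_ [_ [Hxs _]]].
  destruct eventually_lipschitz as [T0 [K [HK Hlip]]].
  assert (Hx_cauchy : cauchy_at_infty x) by exact (cauchy_at_infty_of_lim x xs x_tends_x_plus).
  assert (Hmx_cauchy : cauchy_at_infty (fun t => - x t)).
  { apply (cauchy_at_infty_of_lim _ (- xs)); intros e He.
    destruct (x_tends_x_plus e He) as [T HT]; exists T; intros t Ht.
    replace (- x t - - xs) with (- (x t - xs)) by ring; rewrite Rabs_Ropp; auto. }
  assert (HT0 := Rmax_l T0 1); assert (HT1 := Rmax_r T0 1).
  assert (Hder : forall t, Rmax T0 1 <= t -> is_derive x t (x t * (1 - x t) - y t * x t))
    by (intros t Ht; apply x_derive; lra).
  apply abs_lt_of_one_sided.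
  - apply (barbalat x _ (fun t => y t - ys) (Rmax T0 1) K HK Hx_cauchy Hder).
    + intros a b Ha Hab; replace (y b - ys - (y a - ys)) with (y b - y a) by ring.
      apply Hlip; lra.
    + intros e He; destruct (x_drift_near_x_plus e He) as [T HT].
      exists (xs * e / 4), T; split; [nra|]; intros t Ht Hu; apply (HT t Ht), Hu.
  - apply (barbalat (fun t => - x t) (fun t => - (x t * (1 - x t) - y t * x t))
             (fun t => ys - y t) (Rmax T0 1) K HK Hmx_cauchy).
    + intros t Ht; apply (is_derive_opp x), Hder, Ht.
    + intros a b Ha Hab; replace (ys - y b - (ys - y a)) with (- (y b - y a)) by ring.
      rewrite Rabs_Ropp; apply Hlip; lra.
    + intros e He; destruct (x_drift_near_x_plus e He) as [T HT].
      exists (xs * e / 4), T; split; [nra|]; intros t Ht Hu.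
      assert (H := proj2 (HT t Ht) Hu); lra.
Qed.

Lemma coexistence_gas : is_lim x p_infty xs /\ is_lim y p_infty ys.
Proof.
  split; apply is_lim_p_infty_intro; [apply x_tends_x_plus | apply y_tends_y_plus].
Qed.

End NoDelay.

End Supercritical.

End Solution.

Theorem theorem3p1 (s Y tau : R) (hs : 0 < s) (hY : 0 < Y) (htau : 0 <= tau) :
  (* 1. E0 always unstable *)
  unstable s Y tau 0 0 /\
  (* 2(a). E1 unstable if tau < tau_c *)
  (tau < tau_c s Y -> unstable s Y tau 1 0) /\
  (* 2(b). E1 GAS w.r.t. X^0 if tau > tau_c *)
  (tau_c s Y < tau ->
     loc_asym_stable s Y tau 1 0 /\
     forall phi psi x y : R -> R,
       in_X0 tau phi psi -> is_solution s Y tau phi psi x y ->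
       is_lim x p_infty (Finite 1) /\ is_lim y p_infty (Finite 0)) /\
  (* 3. positivity of E+ *)
  ((0 < x_plus s Y tau /\ 0 < y_plus s Y tau) <-> tau < tau_c s Y) /\
  (* 3(a). tau = 0: E+ GAS w.r.t. int R^2_+ *)
  (tau = 0 -> 0 < x_plus s Y tau -> 0 < y_plus s Y tau ->
     loc_asym_stable s Y tau (x_plus s Y tau) (y_plus s Y tau) /\
     forall phi psi x y : R -> R,
       in_X tau phi psi -> 0 < phi 0 -> 0 < psi 0 ->
       is_solution s Y tau phi psi x y ->
       is_lim x p_infty (Finite (x_plus s Y tau)) /\
       is_lim y p_infty (Finite (y_plus s Y tau))) /\
  (* 3(b). uniform persistence w.r.t. X^0 *)
  (0 < x_plus s Y tau -> 0 < y_plus s Y tau ->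
     exists eps, 0 < eps /\
       forall phi psi x y : R -> R,
         in_X0 tau phi psi -> is_solution s Y tau phi psi x y ->
         liminf_gt x eps /\ liminf_gt y eps).
Proof.
  split; [apply E0_unstable|].
  split; [intros H; apply E1_unstable; auto; now apply tau_lt_tau_c_iff|].
  split.
  { intros H; apply tau_c_lt_iff in H; auto.
    split; [now apply E1_loc_asym_stable|].
    intros phi psi x y HX0 Hsol; now apply (extinction s Y tau phi psi). }
  split; [now apply E_plus_pos_iff|].
  split.
  { intros Htau0 Hxp Hyp.
    assert (Hsup : s < eff_yield s Y tau)
      by (apply tau_lt_tau_c_iff, E_plus_pos_iff; auto).
    split; [subst tau; now apply E_plus_loc_asym_stable_no_delay|].
    intros phi psi x y HX Hphi Hpsi Hsol.
    apply (coexistence_gas s Y tau phi psi); auto.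
    now apply in_X0_of_pos_start. }
  intros Hxp Hyp.
  assert (Hsup : s < eff_yield s Y tau) by (apply tau_lt_tau_c_iff, E_plus_pos_iff; auto).
  exists (persistence_eps s Y tau); split; [now apply persistence_eps_pos|].
  intros phi psi x y HX0 Hsol; now apply (uniform_persistence s Y tau phi psi).
Qed.
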